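(* Let $n\ge3$, $k\ge2$ and $-(n-2)<q<0$. Then the operator \[ T_0=\frac{d^2}{ds^2}+(n-2)\frac{\dot\phi(s)}{\phi(s)}\frac{d}{ds}+\frac{n(n-1)}{\phi(s)^{2n-2}} \] is an isomorphism (bounded, bijective, with bounded inverse) from $\mathscr{C}^k_q(\mathbb{R})$ onto $\mathscr{C}^{k-2}_q(\mathbb{R})$.
   Context: $\phi(s)=(\cosh((n-1)s))^{1/(n-1)}$ and $\dot\phi=d\phi/ds$. For an integer $k\ge0$ and $q\in\mathbb{R}$, $\mathscr{C}^k_q(\mathbb{R})$ is the Banach space of $C^k$ functions $f:\mathbb{R}\to\mathbb{R}$ with finite norm $\|f\|_{\mathscr{C}^k_q}=\sum_{a=0}^k\sup_{s\in\mathbb{R}}|f^{(a)}(s)|\,\phi(s)^{-q}$. *)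

From Stdlib Require Import Reals Lra Lia ClassicalEpsilon.
Open Scope R_scope.

Definition phi (n : nat) (s : R) : R :=
  Rpower (cosh ((INR n - 1) * s)) (1 / (INR n - 1)).

Definition Ck_tower (k : nat) (f : R -> R) (D : nat -> R -> R) : Prop :=
  (forall s, D 0%nat s = f s) /\
  (forall a, (a < k)%nat -> forall s, derivable_pt_lim (D a) s (D (S a) s)) /\
  continuity (D k).

Definition wval (n : nat) (q : R) (D : nat -> R -> R) (a : nat) (s : R) : R :=
  Rabs (D a s) * Rpower (phi n s) (- q).

(* supremum of a set of reals (0 if it has no least upper bound) *)
Definition Rsup (E : R -> Prop) : R :=
  match excluded_middle_informative (exists l, is_lub E l) with
  | left H => proj1_sig (constructive_indefinite_description _ H)
  | right _ => 0
  end.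

Definition finite_wnorm (n k : nat) (q : R) (D : nat -> R -> R) : Prop :=
  forall a, (a <= k)%nat -> exists M, forall s, wval n q D a s <= M.

Definition wnorm (n k : nat) (q : R) (D : nat -> R -> R) : R :=
  sum_f_R0 (fun a => Rsup (fun y => exists s, y = wval n q D a s)) k.

Definition in_Ckq (n k : nat) (q : R) (f : R -> R) (D : nat -> R -> R) : Prop :=
  Ck_tower k f D /\ finite_wnorm n k q D.

Definition T0 (n : nat) (phid : R -> R) (D : nat -> R -> R) (s : R) : R :=
  D 2%nat s + (INR n - 2) * (phid s / phi n s) * D 1%nat s
  + INR n * (INR n - 1) / (phi n s ^ (2 * n - 2)) * D 0%nat s.

(* With m = n - 1 one has phi = cosh(m s)^(1/m), phi'/phi = tanh(m s) and
   n(n-1)/phi^(2n-2) = m(m+1)/cosh(m s)^2, so T0 is the operator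
   f'' + (m-1) tanh(m s) f' + m(m+1) (1 - tanh(m s)^2) f, and the weight phi^(-q) is cosh(m s)^b
   with 0 < b < (m-1)/m.  The homogeneous equation has the explicit solutions tanh(m s) and
   tanh(m s) K(s) - cosh(m s)^(-(m-1)/m), where K' = cosh(m s)^(-(m-1)/m); their Wronskian,
   weighted by cosh(m s)^((m-1)/m), is constant.  Hence a solution vanishing at both ends is zero
   (injectivity), and variation of parameters with the solutions decaying at +oo and at -oo
   solves T0 f = g with the weighted sups of f and f' bounded by a multiple of that of g (this is
   where b < (m-1)/m is used).  Differentiating the equation j times expresses f^(j+2) through
   (T0 f)^(j) and lower derivatives, with coefficients that are polynomials in tanh(m s) and thus
   bounded; this carries the estimates over to all orders. *)

From Stdlib Require Import Reals Lra Lia ClassicalEpsilon FunctionalExtensionality.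
From Coquelicot Require Import Coquelicot.
Open Scope R_scope.

Lemma cosh_pos x : 0 < cosh x.
Proof. unfold cosh. pose proof (exp_pos x). pose proof (exp_pos (- x)). lra. Qed.

Lemma cosh2_sub_sinh2 x : cosh x ^ 2 - sinh x ^ 2 = 1.
Proof.
  unfold cosh, sinh. rewrite exp_Ropp.
  pose proof (exp_pos x). field. lra.
Qed.

Lemma cosh_ge_1 x : 1 <= cosh x.
Proof. pose proof (cosh2_sub_sinh2 x). pose proof (cosh_pos x). nra. Qed.

Lemma cosh_opp x : cosh (- x) = cosh x.
Proof. unfold cosh. rewrite Ropp_involutive. lra. Qed.

Lemma sinh_opp x : sinh (- x) = - sinh x.
Proof. unfold sinh. rewrite Ropp_involutive. lra. Qed.

Lemma exp_le_mono x y : x <= y -> exp x <= exp y.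
Proof. intros [H | ->]; [left; apply exp_increasing|]; lra. Qed.

Lemma ln_cosh_le x : ln (cosh x) <= Rabs x.
Proof.
  rewrite <- (ln_exp (Rabs x)). apply ln_le; [apply cosh_pos|].
  unfold cosh. pose proof (exp_le_mono x (Rabs x) (Rle_abs x)).
  pose proof (exp_le_mono (- x) (Rabs x) ltac:(rewrite <- Rabs_Ropp; apply Rle_abs)). lra.
Qed.

Lemma ln_cosh_ge x : Rabs x - ln 2 <= ln (cosh x).
Proof.
  assert (Hc : exp (Rabs x) / 2 <= cosh x).
  { unfold cosh. pose proof (exp_pos x). pose proof (exp_pos (- x)).
    destruct (Rle_dec 0 x); [rewrite Rabs_right | rewrite Rabs_left]; lra. }
  pose proof (exp_pos (Rabs x)).
  apply ln_le in Hc; [|lra]. unfold Rdiv in Hc.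
  rewrite ln_mult, ln_Rinv, ln_exp in Hc; lra.
Qed.

Lemma exp_neg_le_inv x : 0 <= x -> exp (- x) <= / (1 + x).
Proof.
  intros Hx. rewrite exp_Ropp. apply Rinv_le_contravar; [lra|].
  pose proof (exp_ineq1_le x). lra.
Qed.

Lemma Rabs_sub_le a b : Rabs (a - b) <= Rabs a + Rabs b.
Proof. unfold Rminus. rewrite <- (Rabs_Ropp b). apply Rabs_triang. Qed.

Lemma Rabs_le_eps_eq0 x : (forall e, 0 < e -> Rabs x <= e) -> x = 0.
Proof.
  intros H. destruct (Req_dec x 0) as [|Hx]; auto.
  pose proof (Rabs_pos_lt x Hx). specialize (H (Rabs x / 2)). lra.
Qed.

Lemma is_derive_cst (c x : R) : is_derive (fun _ : R => c) x 0.
Proof. apply is_derive_Reals, derivable_pt_lim_const. Qed.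

Lemma is_derive_add (f g : R -> R) (x df dg : R) : is_derive f x df -> is_derive g x dg ->
  is_derive (fun y => f y + g y) x (df + dg).
Proof. rewrite !is_derive_Reals. apply derivable_pt_lim_plus. Qed.

Lemma is_derive_sub (f g : R -> R) (x df dg : R) : is_derive f x df -> is_derive g x dg ->
  is_derive (fun y => f y - g y) x (df - dg).
Proof. rewrite !is_derive_Reals. apply derivable_pt_lim_minus. Qed.

Lemma is_derive_mul (f g : R -> R) (x df dg : R) : is_derive f x df -> is_derive g x dg ->
  is_derive (fun y => f y * g y) x (df * g x + f x * dg).
Proof. rewrite !is_derive_Reals. apply derivable_pt_lim_mult. Qed.

Lemma is_derive_neg (f : R -> R) (x d : R) : is_derive f x d -> is_derive (fun y => - f y) x (- d).
Proof. rewrite !is_derive_Reals. apply derivable_pt_lim_opp. Qed.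

Lemma is_derive_reflect (f : R -> R) (x d : R) : is_derive f (- x) d ->
  is_derive (fun y => f (- y)) x (- d).
Proof.
  rewrite !is_derive_Reals. intros H. replace (- d) with (d * (-1)) by ring.
  apply (derivable_pt_lim_comp Ropp f); auto.
  apply is_derive_Reals. auto_derive; auto.
Qed.

Lemma is_derive_eq_val (f : R -> R) (x d d' : R) : d = d' -> is_derive f x d -> is_derive f x d'.
Proof. now intros ->. Qed.

Lemma is_derive_uniq (f : R -> R) (x d d' : R) : is_derive f x d -> is_derive f x d' -> d = d'.
Proof. rewrite !is_derive_Reals. apply uniqueness_limite. Qed.

Lemma is_derive_continuous (f : R -> R) (x d : R) : is_derive f x d -> continuity_pt f x.
Proof. rewrite is_derive_Reals. intros H. apply derivable_continuous_pt. now exists d. Qed.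

Lemma mvt_le_diff (F F' G G' : R -> R) a b : a <= b ->
  (forall x, a <= x <= b -> is_derive F x (F' x)) ->
  (forall x, a <= x <= b -> is_derive G x (G' x)) ->
  (forall x, a <= x <= b -> F' x <= G' x) -> F b - F a <= G b - G a.
Proof.
  intros Hab HF HG Hle. destruct (Req_dec a b) as [->|Hne]; [lra|].
  destruct (MVT_cor3 (fun x => G x - F x) (fun x => G' x - F' x) a b) as [c [H1 [H2 H3]]]; [lra| |].
  - intros x H1 H2. apply is_derive_Reals, is_derive_sub; auto.
  - specialize (Hle c (conj H1 H2)). nra.
Qed.

Lemma mvt_le_increasing (F F' : R -> R) a b : a <= b ->
  (forall x, a <= x <= b -> is_derive F x (F' x)) ->
  (forall x, a <= x <= b -> 0 <= F' x) -> F a <= F b.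
Proof.
  intros Hab HF Hpos.
  pose proof (mvt_le_diff (fun _ => 0) (fun _ => 0) F F' a b Hab
    (fun x _ => is_derive_cst 0 x) HF Hpos). lra.
Qed.

Lemma zero_derive_const (F : R -> R) : (forall x, is_derive F x 0) -> forall x y, F x = F y.
Proof.
  intros H.
  assert (Hmono : forall a b, a <= b -> F a <= F b /\ - F a <= - F b).
  { intros a b Hab. split.
    - apply (mvt_le_increasing F (fun _ => 0)); intros; [lra | apply H | lra].
    - apply (mvt_le_increasing (fun y => - F y) (fun _ => 0)); intros; [lra | | lra].
      eapply is_derive_eq_val; [|apply is_derive_neg, H]. ring. }
  intros x y. destruct (Rle_dec x y); [specialize (Hmono x y) | specialize (Hmono y x)]; lra.
Qed.

Definition prim (h : R -> R) (s : R) : R := RInt h 0 s.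

Lemma is_derive_prim h : (forall x, continuity_pt h x) -> forall s, is_derive (prim h) s (h s).
Proof.
  intros Hc s. unfold prim. apply (is_derive_RInt h (RInt h 0) 0 s).
  - apply filter_forall. intro b. apply (RInt_correct (V := R_CompleteNormedModule)).
    apply ex_RInt_continuous. intros z _. apply continuity_pt_filterlim, Hc.
  - apply continuity_pt_filterlim, Hc.
Qed.

Lemma prim_0 h : prim h 0 = 0.
Proof. exact (RInt_point (V := R_CompleteNormedModule) 0 h). Qed.

Lemma is_derive_exp_decay_limit (F F' : R -> R) (B d : R) : 0 < d ->
  (forall s, 0 <= s -> is_derive F s (F' s)) ->
  (forall s, 0 <= s -> Rabs (F' s) <= B * exp (- (d * s))) ->
  exists L, forall s, 0 <= s -> Rabs (L - F s) <= B / d * exp (- (d * s)).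
Proof.
  intros Hd HF HB.
  set (E := fun s => B / d * exp (- (d * s))).
  set (U := fun s => F s - E s).
  set (V := fun s => F s + E s).
  assert (dE : forall s, is_derive E s (- (B * exp (- (d * s))))).
  { intro s. unfold E. auto_derive; auto. field. lra. }
  assert (HB0 : 0 <= B).
  { specialize (HB 0 (Rle_refl 0)). rewrite Rmult_0_r, Ropp_0, exp_0 in HB.
    pose proof (Rabs_pos (F' 0)). lra. }
  assert (HE0 : forall s, 0 <= E s).
  { intro s. unfold E. pose proof (exp_pos (- (d * s))).
    apply Rmult_le_pos; [apply Rdiv_le_0_compat|]; lra. }
  assert (HU : forall a b, 0 <= a <= b -> U a <= U b).
  { intros a b Hab. apply (mvt_le_increasing U (fun s => F' s + B * exp (- (d * s)))); [lra| |].
    - intros x Hx. eapply is_derive_eq_val; [|apply is_derive_sub; [apply HF; lra | apply dE]]. ring.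
    - intros x Hx. specialize (HB x ltac:(lra)). apply Rabs_le_between in HB. lra. }
  assert (HV : forall a b, 0 <= a <= b -> V b <= V a).
  { intros a b Hab.
    enough (- V a <= - V b) by lra.
    apply (mvt_le_increasing (fun s => - V s) (fun s => B * exp (- (d * s)) - F' s)); [lra| |].
    - intros x Hx. eapply is_derive_eq_val;
        [|apply is_derive_neg, is_derive_add; [apply HF; lra | apply dE]]. ring.
    - intros x Hx. specialize (HB x ltac:(lra)). apply Rabs_le_between in HB. lra. }
  assert (UV : forall a b, 0 <= a -> 0 <= b -> U a <= V b).
  { intros a b Ha Hb. set (c := Rmax a b).
    pose proof (Rmax_l a b). pose proof (Rmax_r a b).
    pose proof (HU a c ltac:(unfold c; lra)). pose proof (HV b c ltac:(unfold c; lra)).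
    pose proof (HE0 c). unfold U, V in *. lra. }
  destruct (completeness (fun y => exists s, 0 <= s /\ y = U s)) as [L [HL1 HL2]].
  - exists (V 0). intros y [s [Hs ->]]. apply UV; lra.
  - exists (U 0), 0. split; lra.
  - exists L. intros s Hs.
    assert (U s <= L) by (apply HL1; exists s; split; auto).
    assert (L <= V s) by (apply HL2; intros y [t [Ht ->]]; apply UV; auto).
    unfold U, V, E in *. apply Rabs_le_between. lra.
Qed.

Definition vanishes_at_infinity (h : R -> R) : Prop :=
  forall e, 0 < e -> exists S, forall s, S <= Rabs s -> Rabs (h s) <= e.

Lemma exp_neg_eventually_le d e : 0 < d -> 0 < e ->
  exists S, 0 <= S /\ forall s, S <= s -> exp (- (d * s)) <= e.
Proof.
  intros Hd He. exists (/ (d * e)). split; [left; apply Rinv_0_lt_compat; nra|]. intros s Hs.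
  assert (Hds : 0 < d * s).
  { apply Rmult_lt_0_compat; [lra|]. eapply Rlt_le_trans; [|exact Hs]. apply Rinv_0_lt_compat. nra. }
  eapply Rle_trans; [apply exp_neg_le_inv; lra|].
  apply (Rmult_le_reg_r (1 + d * s)); [lra|]. rewrite Rinv_l by lra.
  apply (Rmult_le_compat_l d) in Hs; [|lra].
  replace (d * / (d * e)) with (/ e) in Hs by (field; lra).
  apply (Rmult_le_compat_l e) in Hs; [|lra]. rewrite Rinv_r in Hs by lra. nra.
Qed.

Lemma exp_decay_vanishes (h : R -> R) K d : 0 < d ->
  (forall s, Rabs (h s) <= K * exp (- (d * Rabs s))) -> vanishes_at_infinity h.
Proof.
  intros Hd Hh e He.
  assert (HK : 0 <= K).
  { specialize (Hh 0). rewrite Rabs_R0, Rmult_0_r, Ropp_0, exp_0 in Hh.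
    pose proof (Rabs_pos (h 0)). lra. }
  destruct (exp_neg_eventually_le d (e / (K + 1))) as [S [HS0 HS]];
    [lra | apply Rdiv_lt_0_compat; lra |].
  exists S. intros s Hs. eapply Rle_trans; [apply Hh|].
  specialize (HS (Rabs s) Hs).
  apply Rle_trans with ((K + 1) * (e / (K + 1))); [|right; field; lra].
  pose proof (exp_pos (- (d * Rabs s))). nra.
Qed.

Lemma vanishes_reflect_comb (h : R -> R) a b : vanishes_at_infinity h ->
  vanishes_at_infinity (fun s => a * h s + b * h (- s)).
Proof.
  intros Hh e He. set (c := Rabs a + Rabs b + 1).
  assert (Hc : 0 < c) by (unfold c; pose proof (Rabs_pos a); pose proof (Rabs_pos b); lra).
  destruct (Hh (e / c)) as [S HS]; [apply Rdiv_lt_0_compat; lra|].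
  exists S. intros s Hs.
  pose proof (HS s Hs) as H1. pose proof (HS (- s) ltac:(rewrite Rabs_Ropp; lra)) as H2.
  eapply Rle_trans; [apply Rabs_triang|]. rewrite !Rabs_mult.
  pose proof (Rabs_pos a). pose proof (Rabs_pos b).
  assert (0 < e / c) by (apply Rdiv_lt_0_compat; lra).
  apply Rle_trans with (c * (e / c)); [unfold c in *; nra | right; field; lra].
Qed.

Lemma coef_zero_of_vanishing (c : R) (u v : R -> R) (d S : R) : 0 < d ->
  (forall s, S <= s -> d <= u s) -> vanishes_at_infinity v ->
  (forall s, c * u s = v s) -> c = 0.
Proof.
  intros Hd Hu Hv Huv. apply Rabs_le_eps_eq0. intros e He.
  destruct (Hv (e * d)) as [S' HS']; [nra|].
  set (s := Rmax S (Rabs S')).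
  pose proof (Rmax_l S (Rabs S')). pose proof (Rmax_r S (Rabs S')).
  pose proof (Rabs_pos S'). pose proof (Rle_abs S').
  specialize (Hu s ltac:(unfold s; lra)).
  specialize (HS' s ltac:(rewrite Rabs_right; unfold s in *; lra)).
  rewrite <- Huv, Rabs_mult, (Rabs_right (u s)) in HS' by lra.
  pose proof (Rabs_pos c).
  apply (Rmult_le_reg_r d); [lra|]. nra.
Qed.

(** * Hyperbolic functions of [m s] *)

Definition tanhm (m s : R) : R := sinh (m * s) / cosh (m * s).
Definition dtanhm (m s : R) : R := m * (1 - tanhm m s ^ 2).
Definition coshpow (m g s : R) : R := Rpower (cosh (m * s)) g.

Section ScaledHyperbolic.
Variable m : R.

Lemma one_sub_tanhm2 s : 1 - tanhm m s ^ 2 = / cosh (m * s) ^ 2.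
Proof.
  unfold tanhm. pose proof (cosh2_sub_sinh2 (m * s)). pose proof (cosh_pos (m * s)).
  replace (1 - (sinh (m * s) / cosh (m * s)) ^ 2)
    with ((cosh (m * s) ^ 2 - sinh (m * s) ^ 2) / cosh (m * s) ^ 2) by (field; lra).
  rewrite H. field. lra.
Qed.

Lemma Rabs_tanhm_le1 s : Rabs (tanhm m s) <= 1.
Proof.
  assert (0 <= 1 - tanhm m s ^ 2).
  { rewrite one_sub_tanhm2. pose proof (cosh_pos (m * s)).
    apply Rlt_le, Rinv_0_lt_compat. nra. }
  apply Rabs_le. nra.
Qed.

Lemma dtanhm_bound s : 0 <= m -> 0 <= dtanhm m s <= m.
Proof.
  intros Hm. unfold dtanhm. pose proof (Rabs_tanhm_le1 s) as H. apply Rabs_le_between in H.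
  assert (0 <= tanhm m s ^ 2 <= 1) by nra. nra.
Qed.

Lemma tanhm_odd s : tanhm m (- s) = - tanhm m s.
Proof.
  unfold tanhm. replace (m * - s) with (- (m * s)) by ring.
  rewrite cosh_opp, sinh_opp. field. pose proof (cosh_pos (m * s)). lra.
Qed.

Lemma dtanhm_even s : dtanhm m (- s) = dtanhm m s.
Proof. unfold dtanhm. rewrite tanhm_odd. ring. Qed.

Lemma coshpow_even g s : coshpow m g (- s) = coshpow m g s.
Proof. unfold coshpow. replace (m * - s) with (- (m * s)) by ring. now rewrite cosh_opp. Qed.

Lemma coshpow_pos g s : 0 < coshpow m g s.
Proof. apply exp_pos. Qed.

Lemma coshpow_cancel a s : coshpow m a s * coshpow m (- a) s = 1.
Proof. unfold coshpow. rewrite <- Rpower_plus, Rplus_opp_r. apply Rpower_O, cosh_pos. Qed.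

Lemma is_derive_tanhm s : is_derive (tanhm m) s (dtanhm m s).
Proof.
  unfold dtanhm. rewrite one_sub_tanhm2. pose proof (cosh_pos (m * s)).
  unfold tanhm. unfold cosh, sinh in *. auto_derive.
  - lra.
  - rewrite exp_Ropp in *. pose proof (exp_pos (m * s)).
    field. split; nra.
Qed.

Lemma is_derive_coshpow g s : is_derive (coshpow m g) s (g * m * tanhm m s * coshpow m g s).
Proof.
  unfold coshpow, Rpower, tanhm. pose proof (cosh_pos (m * s)).
  unfold cosh, sinh in *. auto_derive; [lra|]. unfold Rdiv. field. unfold Rdiv in H. lra.
Qed.

Lemma coshpow_le_exp g s : 0 <= g -> 0 <= m -> coshpow m g s <= exp (g * m * Rabs s).
Proof.
  intros Hg Hm. unfold coshpow, Rpower. apply exp_le_mono.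
  pose proof (ln_cosh_le (m * s)). rewrite Rabs_mult, (Rabs_right m) in H by lra.
  rewrite Rmult_assoc. now apply Rmult_le_compat_l.
Qed.

Lemma coshpow_neg_le_exp g s : 0 <= g -> 0 <= m ->
  coshpow m (- g) s <= exp (g * ln 2) * exp (- (g * m * Rabs s)).
Proof.
  intros Hg Hm. unfold coshpow, Rpower. rewrite <- exp_plus. apply exp_le_mono.
  pose proof (ln_cosh_ge (m * s)). rewrite Rabs_mult, (Rabs_right m) in H by lra. nra.
Qed.

Lemma coshpow_neg_le1 g s : 0 <= g -> coshpow m (- g) s <= 1.
Proof.
  intros Hg. unfold coshpow, Rpower. rewrite <- exp_0. apply exp_le_mono.
  pose proof (cosh_ge_1 (m * s)).
  assert (0 <= ln (cosh (m * s))) by (rewrite <- ln_1; apply ln_le; lra). nra.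
Qed.

Lemma coshpow_neg_vanishes g : 0 < m -> 0 < g -> vanishes_at_infinity (coshpow m (- g)).
Proof.
  intros Hm Hg. apply (exp_decay_vanishes _ (exp (g * ln 2)) (g * m)); [nra|].
  intro s. rewrite Rabs_right by (left; apply coshpow_pos). apply coshpow_neg_le_exp; lra.
Qed.

Lemma tanhm_eventually_ge e : 0 < m -> 0 < e ->
  exists S, 0 <= S /\ forall s, S <= s -> 1 - e <= tanhm m s.
Proof.
  intros Hm He. destruct (coshpow_neg_vanishes 1 Hm ltac:(lra) e He) as [S HS].
  exists (Rabs S). split; [apply Rabs_pos|]. intros s Hs.
  pose proof (Rle_abs S). pose proof (Rabs_pos S).
  specialize (HS s ltac:(rewrite Rabs_right; lra)).
  rewrite Rabs_right in HS by (left; apply coshpow_pos).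
  unfold coshpow in HS. rewrite Rpower_Ropp, Rpower_1 in HS by apply cosh_pos.
  assert (Hs0 : 0 <= m * s) by nra.
  assert (0 <= tanhm m s).
  { unfold tanhm. apply Rdiv_le_0_compat; [|apply cosh_pos].
    unfold sinh. pose proof (exp_le_mono (- (m * s)) (m * s)). lra. }
  pose proof (Rabs_tanhm_le1 s) as Ht. apply Rabs_le_between in Ht.
  pose proof (one_sub_tanhm2 s). pose proof (cosh_ge_1 (m * s)).
  assert (/ cosh (m * s) ^ 2 <= / cosh (m * s)) by (apply Rinv_le_contravar; nra).
  nra.
Qed.

Lemma exp_bound_of_weighted b (h : R -> R) M s : 0 <= b -> 0 <= m ->
  (forall s, Rabs (h s) * coshpow m b s <= M) ->
  Rabs (h s) <= M * exp (b * ln 2) * exp (- (b * m * Rabs s)).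
Proof.
  intros Hb Hm HM. specialize (HM s).
  pose proof (coshpow_pos (- b) s). pose proof (Rabs_pos (h s)). pose proof (coshpow_pos b s).
  rewrite <- (Rmult_1_r (Rabs (h s))), <- (coshpow_cancel b s), <- Rmult_assoc, (Rmult_assoc M).
  apply Rmult_le_compat; [apply Rmult_le_pos | | exact HM | apply coshpow_neg_le_exp]; lra.
Qed.

Lemma weighted_bounded_vanishes b (h : R -> R) Z : 0 < m -> 0 < b ->
  (forall s, Rabs (h s) * coshpow m b s <= Z) -> vanishes_at_infinity h.
Proof.
  intros Hm Hb HZ. apply (exp_decay_vanishes h (Z * exp (b * ln 2)) (b * m)); [nra|].
  intro s. apply exp_bound_of_weighted; auto; lra.
Qed.

Lemma weighted_of_exp_bound b (h : R -> R) K s : 0 <= b -> 0 <= m ->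
  Rabs (h s) <= K * exp (- (b * m * Rabs s)) -> Rabs (h s) * coshpow m b s <= K.
Proof.
  intros Hb Hm Hh. pose proof (Rabs_pos (h s)). pose proof (coshpow_pos b s).
  eapply Rle_trans; [apply Rmult_le_compat; [lra | lra | apply Hh | apply coshpow_le_exp; lra]|].
  rewrite Rmult_assoc, <- exp_plus, Rplus_opp_l, exp_0. lra.
Qed.

End ScaledHyperbolic.

Lemma abs_le_of_derive_bound (F F' G G' : R -> R) s : 0 <= s -> F 0 = 0 ->
  (forall t, 0 <= t <= s -> is_derive F t (F' t)) ->
  (forall t, 0 <= t <= s -> is_derive G t (G' t)) ->
  (forall t, 0 <= t <= s -> Rabs (F' t) <= G' t) -> Rabs (F s) <= G s - G 0.
Proof.
  intros Hs HF0 HF HG HFG. apply Rabs_le_between.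
  pose proof (mvt_le_diff F F' G G' 0 s Hs HF HG) as Hup.
  pose proof (mvt_le_diff (fun t => - F t) (fun t => - F' t) G G' 0 s Hs) as Hlow.
  specialize (Hup ltac:(intros t Ht; specialize (HFG t Ht); apply Rabs_le_between in HFG; lra)).
  specialize (Hlow ltac:(intros; apply is_derive_neg; auto) HG
                   ltac:(intros t Ht; specialize (HFG t Ht); apply Rabs_le_between in HFG; lra)).
  lra.
Qed.

Lemma prim_reflect_bound (h : R -> R) c gam : 0 < gam -> (forall x, continuity_pt h x) ->
  (forall r, Rabs (h r) <= c * exp (gam * Rabs r)) ->
  forall s, 0 <= s -> Rabs (prim h (- s)) <= c / gam * exp (gam * s).
Proof.
  intros Hgam Hc Hh s Hs.
  assert (Hc0 : 0 <= c).
  { specialize (Hh 0). rewrite Rabs_R0, Rmult_0_r, exp_0 in Hh. pose proof (Rabs_pos (h 0)). lra. }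
  eapply Rle_trans.
  - apply (abs_le_of_derive_bound (fun t => prim h (- t)) (fun t => - h (- t))
             (fun t => c / gam * exp (gam * t)) (fun t => c * exp (gam * t))); auto.
    + now rewrite Ropp_0, prim_0.
    + intros t _. apply is_derive_reflect, is_derive_prim, Hc.
    + intros t _. auto_derive; auto. field. lra.
    + intros t Ht. rewrite Rabs_Ropp. specialize (Hh (- t)).
      now rewrite Rabs_Ropp, (Rabs_right t) in Hh by lra.
  - rewrite Rmult_0_r, exp_0. assert (0 <= c / gam) by (apply Rdiv_le_0_compat; lra). lra.
Qed.

(** * The homogeneous equation *)

Section HomogeneousOde.
Variable m : R.
Hypothesis m_gt1 : 1 < m.

Definition ode_a (s : R) : R := (m - 1) * tanhm m s.
Definition ode_b (s : R) : R := m * (m + 1) * (1 - tanhm m s ^ 2).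

Definition is_solution (g y y' : R -> R) : Prop :=
  (forall s, is_derive y s (y' s)) /\
  (forall s, is_derive y' s (g s - ode_a s * y' s - ode_b s * y s)).

Lemma is_solution_ext (g y y' z z' : R -> R) : (forall s, y s = z s) -> (forall s, y' s = z' s) ->
  is_solution g y y' -> is_solution g z z'.
Proof.
  intros Hy Hy' [H1 H2]. split; intro s.
  - rewrite <- Hy'. apply (is_derive_ext y); auto.
  - rewrite <- Hy, <- Hy'. apply (is_derive_ext y'); auto.
Qed.

Lemma solution_lincomb (a c : R) (u u' v v' : R -> R) :
  is_solution (fun _ => 0) u u' -> is_solution (fun _ => 0) v v' ->
  is_solution (fun _ => 0) (fun s => a * u s + c * v s) (fun s => a * u' s + c * v' s).
Proof.
  intros [Hu Hu'] [Hv Hv']. split; intro s.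
  - apply is_derive_add; apply is_derive_scal; auto.
  - eapply is_derive_eq_val; [|apply is_derive_add; apply is_derive_scal; auto]. ring.
Qed.

Definition wexp : R := (m - 1) / m.

Lemma wexp_pos : 0 < wexp.
Proof. unfold wexp. apply Rdiv_lt_0_compat; lra. Qed.

Lemma wexp_mul : wexp * m = m - 1.
Proof. unfold wexp. field. lra. Qed.

Lemma tanhm_solution : is_solution (fun _ => 0) (tanhm m) (dtanhm m).
Proof.
  split; intro s; [apply is_derive_tanhm|].
  unfold dtanhm. eapply is_derive_eq_val;
    [|apply is_derive_scal, is_derive_sub; [apply is_derive_cst | apply is_derive_pow, is_derive_tanhm]].
  unfold ode_a, ode_b, dtanhm. simpl. ring.
Qed.

Definition Kint : R -> R := prim (coshpow m (- wexp)).

Lemma is_derive_Kint s : is_derive Kint s (coshpow m (- wexp) s).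
Proof. apply is_derive_prim. intro x. eapply is_derive_continuous, is_derive_coshpow. Qed.

Lemma Kint_0 : Kint 0 = 0.
Proof. apply prim_0. Qed.

Lemma Kint_odd s : Kint (- s) = - Kint s.
Proof.
  assert (Hsum : forall x, Kint x + Kint (- x) = Kint 0 + Kint (- 0)).
  { intro x. apply (zero_derive_const (fun s => Kint s + Kint (- s))). intro y.
    eapply is_derive_eq_val;
      [|apply is_derive_add; [apply is_derive_Kint | apply is_derive_reflect, is_derive_Kint]].
    rewrite coshpow_even. ring. }
  specialize (Hsum s). rewrite Ropp_0, Kint_0 in Hsum. lra.
Qed.

Lemma Kint_mono a b : 0 <= a <= b -> Kint a <= Kint b.
Proof.
  intros Hab. apply (mvt_le_increasing _ (coshpow m (- wexp))); [lra| |].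
  - intros; apply is_derive_Kint.
  - intros; left; apply coshpow_pos.
Qed.

Lemma Kint_1_pos : 0 < Kint 1.
Proof.
  destruct (MVT_cor3 Kint (coshpow m (- wexp)) 0 1) as [c [_ [_ Hc]]];
    [lra | intros; apply is_derive_Reals, is_derive_Kint |].
  rewrite Kint_0 in Hc. pose proof (coshpow_pos m (- wexp) c). lra.
Qed.

Definition sol2 (s : R) : R := tanhm m s * Kint s - coshpow m (- wexp) s.
Definition dsol2 (s : R) : R := dtanhm m s * Kint s + m * tanhm m s * coshpow m (- wexp) s.

Lemma sol2_solution : is_solution (fun _ => 0) sol2 dsol2.
Proof.
  destruct tanhm_solution as [_ Hdt]. split; intro s.
  - eapply is_derive_eq_val; [|apply is_derive_sub;
      [apply is_derive_mul; [apply is_derive_tanhm | apply is_derive_Kint] | apply is_derive_coshpow]].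
    unfold dsol2, dtanhm, wexp. field. lra.
  - eapply is_derive_eq_val; [|apply is_derive_add;
      [apply is_derive_mul; [apply Hdt | apply is_derive_Kint] |
       apply is_derive_mul; [apply is_derive_scal, is_derive_tanhm | apply is_derive_coshpow]]].
    unfold sol2, dsol2, ode_a, ode_b, dtanhm, wexp. field. lra.
Qed.

Lemma sol2_even s : sol2 (- s) = sol2 s.
Proof. unfold sol2. rewrite tanhm_odd, Kint_odd, coshpow_even. ring. Qed.

Lemma dsol2_odd s : dsol2 (- s) = - dsol2 s.
Proof. unfold dsol2. rewrite tanhm_odd, Kint_odd, coshpow_even, dtanhm_even. ring. Qed.

Lemma wronskian_sol s : tanhm m s * dsol2 s - dtanhm m s * sol2 s = m * coshpow m (- wexp) s.
Proof. unfold dsol2, sol2, dtanhm. ring. Qed.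

(* The weight [coshpow m wexp] is exp of a primitive of [ode_a], which makes the weighted
   Wronskian of two solutions constant (Abel's identity). *)
Lemma wronskian_const (u u' v v' : R -> R) :
  is_solution (fun _ => 0) u u' -> is_solution (fun _ => 0) v v' ->
  forall s t, coshpow m wexp s * (u s * v' s - u' s * v s) =
              coshpow m wexp t * (u t * v' t - u' t * v t).
Proof.
  intros [Hu Hu'] [Hv Hv'].
  apply (zero_derive_const (fun s => coshpow m wexp s * (u s * v' s - u' s * v s))).
  intro x. eapply is_derive_eq_val;
    [|apply is_derive_mul; [apply is_derive_coshpow | apply is_derive_sub; apply is_derive_mul; auto]].
  unfold ode_a, wexp. field. lra.
Qed.

Lemma homogeneous_repr (h h' : R -> R) : is_solution (fun _ => 0) h h' ->
  exists al be, forall s, h s * m = be * tanhm m s - al * sol2 s.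
Proof.
  intros Hh.
  exists (coshpow m wexp 0 * (h 0 * dtanhm m 0 - h' 0 * tanhm m 0)),
         (coshpow m wexp 0 * (h 0 * dsol2 0 - h' 0 * sol2 0)).
  intro s.
  rewrite <- (wronskian_const h h' _ _ Hh tanhm_solution s 0).
  rewrite <- (wronskian_const h h' _ _ Hh sol2_solution s 0).
  transitivity (h s * (coshpow m wexp s * (tanhm m s * dsol2 s - dtanhm m s * sol2 s))); [|ring].
  rewrite wronskian_sol.
  transitivity (h s * m * (coshpow m wexp s * coshpow m (- wexp) s)); [|ring].
  rewrite coshpow_cancel. ring.
Qed.

Lemma sol2_eventually_ge : exists S, forall s, S <= s -> Kint 1 / 2 <= sol2 s.
Proof.
  pose proof Kint_1_pos as HK1.
  destruct (tanhm_eventually_ge m (1 / 4)) as [S1 [HS1 Ht]]; [lra | lra |].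
  destruct (coshpow_neg_vanishes m wexp ltac:(lra) wexp_pos (Kint 1 / 4)) as [S2 Hc]; [lra|].
  exists (Rmax (Rmax S1 (Rabs S2)) 1). intros s Hs.
  pose proof (Rmax_l (Rmax S1 (Rabs S2)) 1). pose proof (Rmax_r (Rmax S1 (Rabs S2)) 1).
  pose proof (Rmax_l S1 (Rabs S2)). pose proof (Rmax_r S1 (Rabs S2)).
  specialize (Ht s ltac:(lra)).
  pose proof (Rle_abs S2). pose proof (Rabs_pos S2).
  specialize (Hc s ltac:(rewrite Rabs_right; lra)).
  rewrite Rabs_right in Hc by (left; apply coshpow_pos).
  assert (Kint 1 <= Kint s) by (apply Kint_mono; lra).
  unfold sol2. nra.
Qed.

Lemma vanishing_homogeneous_zero (h h' : R -> R) :
  is_solution (fun _ => 0) h h' -> vanishes_at_infinity h -> forall s, h s = 0.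
Proof.
  intros Hh Hvan. destruct (homogeneous_repr h h' Hh) as [al [be Hrep]].
  assert (Hal : al = 0).
  { destruct sol2_eventually_ge as [S HS].
    apply (coef_zero_of_vanishing al sol2 (fun s => - m / 2 * h s + - m / 2 * h (- s)) (Kint 1 / 2) S).
    - pose proof Kint_1_pos. lra.
    - exact HS.
    - now apply vanishes_reflect_comb.
    - intros s. pose proof (Hrep s). pose proof (Hrep (- s)).
      rewrite tanhm_odd, sol2_even in *. nra. }
  assert (Hbe : be = 0).
  { destruct (tanhm_eventually_ge m (1 / 4)) as [S [_ HS]]; [lra | lra |].
    apply (coef_zero_of_vanishing be (tanhm m) (fun s => m / 2 * h s + - m / 2 * h (- s)) (3 / 4) S).
    - lra.
    - intros s Hs. specialize (HS s Hs). lra.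
    - now apply vanishes_reflect_comb.
    - intros s. pose proof (Hrep s). pose proof (Hrep (- s)).
      rewrite tanhm_odd, sol2_even in *. nra. }
  intro s. specialize (Hrep s). rewrite Hal, Hbe in Hrep. nra.
Qed.

End HomogeneousOde.

(** * Solving the inhomogeneous equation *)

Section DecayingSolution.
Variable m : R.
Hypothesis m_gt1 : 1 < m.

Definition tail_const : R := exp (wexp m * ln 2).

Lemma tail_const_pos : 0 < tail_const.
Proof. apply exp_pos. Qed.

Lemma coshpow_wexp_le_exp s : coshpow m (- wexp m) s <= tail_const * exp (- ((m - 1) * Rabs s)).
Proof.
  eapply Rle_trans; [apply coshpow_neg_le_exp; pose proof (wexp_pos m m_gt1); lra|].
  unfold tail_const. rewrite <- (wexp_mul m m_gt1). now right.
Qed.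

Lemma coshpow_wexp_le s : coshpow m (wexp m) s <= exp ((m - 1) * Rabs s).
Proof.
  eapply Rle_trans; [apply coshpow_le_exp; pose proof (wexp_pos m m_gt1); lra|].
  now rewrite (wexp_mul m m_gt1).
Qed.

Lemma Kint_limit : exists A, 0 < A /\
  forall s, 0 <= s -> Rabs (A - Kint m s) <= tail_const / (m - 1) * exp (- ((m - 1) * s)).
Proof.
  destruct (is_derive_exp_decay_limit (Kint m) (coshpow m (- wexp m)) tail_const (m - 1))
    as [A HA]; [lra | intros; apply is_derive_Kint |
                 intros s Hs |].
  { rewrite Rabs_right by (left; apply coshpow_pos).
    pose proof (coshpow_wexp_le_exp s) as H. now rewrite Rabs_right in H by lra. }
  exists A. split; auto.
  pose proof (Kint_1_pos m) as HK1.
  assert (Hc : 0 < tail_const / (m - 1)) by (apply Rdiv_lt_0_compat; [apply tail_const_pos | lra]).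
  destruct (exp_neg_eventually_le (m - 1) (Kint m 1 / 2 / (tail_const / (m - 1)))) as [S [HS0 HS]];
    [lra | apply Rdiv_lt_0_compat; lra |].
  set (s := Rmax 1 S). pose proof (Rmax_l 1 S). pose proof (Rmax_r 1 S).
  specialize (HA s ltac:(unfold s; lra)). specialize (HS s ltac:(unfold s; lra)).
  apply Rabs_le_between in HA.
  assert (Kint m 1 <= Kint m s) by (apply Kint_mono; unfold s; lra).
  apply (Rmult_le_compat_l (tail_const / (m - 1))) in HS; [|lra].
  replace (tail_const / (m - 1) * (Kint m 1 / 2 / (tail_const / (m - 1)))) with (Kint m 1 / 2) in HS
    by (pose proof tail_const_pos; field; split; lra).
  lra.
Qed.

Section WithLimit.
Variable A : R.
Hypothesis A_pos : 0 < A.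
Hypothesis Kint_tail :
  forall s, 0 <= s -> Rabs (A - Kint m s) <= tail_const / (m - 1) * exp (- ((m - 1) * s)).

(* [ysol] is the solution of the homogeneous equation decaying at [+oo]; its reflection
   [ysol (- s)] decays at [-oo]. *)
Definition ysol (s : R) : R := A * tanhm m s - sol2 m s.
Definition dysol (s : R) : R := A * dtanhm m s - dsol2 m s.

Lemma ysol_solution : is_solution m (fun _ => 0) ysol dysol.
Proof.
  eapply is_solution_ext;
    [| | apply (solution_lincomb m A (-1) _ _ _ _ (tanhm_solution m) (sol2_solution m m_gt1))];
    intro s; unfold ysol, dysol; ring.
Qed.

Lemma ysol_reflect s : ysol (- s) = - A * tanhm m s - sol2 m s.
Proof. unfold ysol. rewrite tanhm_odd, sol2_even. ring. Qed.

Lemma dysol_reflect s : dysol (- s) = A * dtanhm m s + dsol2 m s.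
Proof. unfold dysol. rewrite dtanhm_even, dsol2_odd. ring. Qed.

Lemma wronskian_ysol s :
  coshpow m (wexp m) s * (ysol (- s) * dysol s + dysol (- s) * ysol s) = 2 * A * m.
Proof.
  rewrite ysol_reflect, dysol_reflect. unfold ysol, dysol.
  transitivity (2 * A * (coshpow m (wexp m) s *
                         (tanhm m s * dsol2 m s - dtanhm m s * sol2 m s))); [ring|].
  rewrite wronskian_sol.
  transitivity (2 * A * m * (coshpow m (wexp m) s * coshpow m (- wexp m) s)); [ring|].
  rewrite coshpow_cancel. ring.
Qed.

Definition ysol_const : R := (m + 1) * (2 * A + tail_const / (m - 1) + tail_const + 1).

Lemma ysol_split s :
  ysol s = tanhm m s * (A - Kint m s) + coshpow m (- wexp m) s /\
  dysol s = dtanhm m s * (A - Kint m s) - m * tanhm m s * coshpow m (- wexp m) s.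
Proof. unfold ysol, dysol, sol2, dsol2. split; ring. Qed.

Lemma Kint_gap_bound s : Rabs (A - Kint m s) <= 2 * A + tail_const / (m - 1).
Proof.
  assert (Hc : 0 <= tail_const / (m - 1))
    by (apply Rdiv_le_0_compat; [left; apply tail_const_pos | lra]).
  assert (HK : forall s, 0 <= s -> Rabs (Kint m s) <= A + tail_const / (m - 1)).
  { intros t Ht. specialize (Kint_tail t Ht).
    assert (exp (- ((m - 1) * t)) <= 1) by (rewrite <- exp_0 at 2; apply exp_le_mono; nra).
    apply Rabs_le_between in Kint_tail. apply Rabs_le_between. nra. }
  assert (HKs : Rabs (Kint m s) <= A + tail_const / (m - 1)).
  { destruct (Rle_dec 0 s); [auto|].
    replace s with (- - s) by ring. rewrite Kint_odd, Rabs_Ropp. apply HK. lra. }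
  eapply Rle_trans; [apply Rabs_triang|]. rewrite Rabs_Ropp, Rabs_right by lra. lra.
Qed.

Lemma ysol_bounded s : Rabs (ysol s) <= ysol_const /\ Rabs (dysol s) <= ysol_const.
Proof.
  destruct (ysol_split s) as [-> ->].
  pose proof (Kint_gap_bound s) as HK. pose proof (Rabs_pos (A - Kint m s)).
  pose proof (Rabs_tanhm_le1 m s). pose proof (Rabs_pos (tanhm m s)).
  pose proof (dtanhm_bound m s ltac:(lra)).
  pose proof (coshpow_neg_le1 m (wexp m) s (Rlt_le _ _ (wexp_pos m m_gt1))).
  pose proof (coshpow_pos m (- wexp m) s). pose proof tail_const_pos.
  assert (0 <= tail_const / (m - 1)) by (apply Rdiv_le_0_compat; lra).
  assert (Ht : Rabs (tanhm m s) * coshpow m (- wexp m) s <= 1) by nra.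
  unfold ysol_const. split.
  - eapply Rle_trans; [apply Rabs_triang|].
    rewrite Rabs_mult, (Rabs_right (coshpow _ _ _)) by lra. nra.
  - eapply Rle_trans; [apply Rabs_sub_le|].
    rewrite !Rabs_mult, (Rabs_right (coshpow _ _ _)), (Rabs_right m), (Rabs_right (dtanhm m s)) by lra.
    assert (dtanhm m s * Rabs (A - Kint m s) <= m * (2 * A + tail_const / (m - 1)))
      by (apply Rmult_le_compat; lra).
    assert (m * Rabs (tanhm m s) * coshpow m (- wexp m) s <= m) by (rewrite Rmult_assoc; nra).
    nra.
Qed.

Lemma ysol_decay s : 0 <= s ->
  Rabs (ysol s) <= ysol_const * exp (- ((m - 1) * s)) /\
  Rabs (dysol s) <= ysol_const * exp (- ((m - 1) * s)).
Proof.
  intros Hs. destruct (ysol_split s) as [-> ->].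
  specialize (Kint_tail s Hs). pose proof (Rabs_pos (A - Kint m s)).
  pose proof (Rabs_tanhm_le1 m s). pose proof (Rabs_pos (tanhm m s)).
  pose proof (dtanhm_bound m s ltac:(lra)).
  pose proof (coshpow_wexp_le_exp s) as Hc. rewrite Rabs_right in Hc by lra.
  pose proof (coshpow_pos m (- wexp m) s). pose proof tail_const_pos.
  set (E := exp (- ((m - 1) * s))) in *. assert (0 < E) by apply exp_pos.
  set (c := tail_const / (m - 1)) in *.
  assert (0 <= c) by (apply Rdiv_le_0_compat; lra).
  assert (Hconst : (m + 1) * (c + tail_const) * E <= ysol_const * E).
  { apply Rmult_le_compat_r; [lra|]. unfold ysol_const. fold c. nra. }
  assert (Ht : Rabs (tanhm m s) * coshpow m (- wexp m) s <= tail_const * E) by nra.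
  split.
  - eapply Rle_trans; [apply Rabs_triang|].
    rewrite Rabs_mult, (Rabs_right (coshpow _ _ _)) by lra. nra.
  - eapply Rle_trans; [apply Rabs_sub_le|].
    rewrite !Rabs_mult, (Rabs_right (coshpow _ _ _)), (Rabs_right m), (Rabs_right (dtanhm m s)) by lra.
    nra.
Qed.

Section VariationOfParameters.
Variable b : R.
Hypothesis b_pos : 0 < b.
Hypothesis b_small : b * m < m - 1.

Definition kern (g : R -> R) (r : R) : R := ysol r * coshpow m (wexp m) r * g r.
Definition reflect (g : R -> R) (r : R) : R := g (- r).
Definition tailint (g : R -> R) (I s : R) : R := I - prim (kern g) s.

(* Variation of parameters with the Wronskian [wronskian_ysol]; [tailint g I] and
   [tailint (reflect g) J (- s)] play the roles of the integrals of [kern] over [[s, +oo)] and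
   (after reflection) [(-oo, s]], once [I] and [J] are the limits of the primitives. *)
Definition vsol (g : R -> R) (I J s : R) : R :=
  / (2 * A * m) * (ysol s * tailint (reflect g) J (- s) + ysol (- s) * tailint g I s).
Definition dvsol (g : R -> R) (I J s : R) : R :=
  / (2 * A * m) * (dysol s * tailint (reflect g) J (- s) - dysol (- s) * tailint g I s).

Lemma reflect_reflect g : reflect (reflect g) = g.
Proof. apply functional_extensionality. intro x. unfold reflect. now rewrite Ropp_involutive. Qed.

Lemma kern_continuous g : (forall x, continuity_pt g x) -> forall x, continuity_pt (kern g) x.
Proof.
  destruct ysol_solution as [Hy _].
  intros Hg x. unfold kern. apply continuity_pt_mult; [apply continuity_pt_mult|]; auto.
  - eapply is_derive_continuous, Hy.
  - eapply is_derive_continuous, is_derive_coshpow.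
Qed.

Lemma reflect_continuous g : (forall x, continuity_pt g x) -> forall x, continuity_pt (reflect g) x.
Proof.
  intros Hg x. apply (continuity_pt_comp Ropp g); [|apply Hg].
  apply continuity_pt_opp, continuity_pt_id.
Qed.

Lemma is_derive_tailint g I s : (forall x, continuity_pt g x) ->
  is_derive (tailint g I) s (- kern g s).
Proof.
  intros Hg. eapply is_derive_eq_val;
    [|apply is_derive_sub; [apply is_derive_cst | apply is_derive_prim, kern_continuous, Hg]].
  ring.
Qed.

Lemma vsol_solution g I J : (forall x, continuity_pt g x) -> is_solution m g (vsol g I J) (dvsol g I J).
Proof.
  intros Hg. destruct ysol_solution as [Hy Hy'].
  assert (HgJ : forall s, is_derive (fun s => tailint (reflect g) J (- s)) s
                             (ysol (- s) * coshpow m (wexp m) s * g s)).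
  { intro s. eapply is_derive_eq_val;
      [|apply is_derive_reflect, is_derive_tailint, reflect_continuous, Hg].
    unfold kern, reflect. rewrite coshpow_even, !Ropp_involutive. ring. }
  assert (HyJ : forall s, is_derive (fun s => ysol (- s)) s (- dysol (- s)))
    by (intro; apply is_derive_reflect, Hy).
  assert (Hy'J : forall s, is_derive (fun s => dysol (- s)) s
                   (- (0 - ode_a m (- s) * dysol (- s) - ode_b m (- s) * ysol (- s)))).
  { intro; apply is_derive_reflect, Hy'. }
  pose proof (A_pos). split; intro s.
  - unfold vsol, dvsol. eapply is_derive_eq_val;
      [|apply is_derive_scal with (k := / (2 * A * m)), is_derive_add; apply is_derive_mul;
        [apply Hy | apply HgJ | apply HyJ | apply is_derive_tailint, Hg]].
    unfold kern. field. lra.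
  - pose proof (wronskian_ysol s) as HW. unfold vsol, dvsol. eapply is_derive_eq_val;
      [|apply is_derive_scal with (k := / (2 * A * m)), is_derive_sub; apply is_derive_mul;
        [apply Hy' | apply HgJ | apply Hy'J | apply is_derive_tailint, Hg]].
    unfold kern, ode_a, ode_b in *. rewrite tanhm_odd in *.
    replace (g s) with (g s * (coshpow m (wexp m) s * (ysol (- s) * dysol s + dysol (- s) * ysol s))
                          / (2 * A * m)) at 3 by (rewrite HW; field; lra).
    field. lra.
Qed.

Definition vsol_const : R :=
  ysol_const * ysol_const * (2 / (b * m) + 1 / (m - 1 - b * m)) / (2 * A * m).

Section BoundedRhs.
Variables (g : R -> R) (G : R).
Hypothesis g_cont : forall x, continuity_pt g x.
Hypothesis g_bound : forall r, Rabs (g r) <= G * exp (- (b * m * Rabs r)).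

Lemma kern_decay r : 0 <= r -> Rabs (kern g r) <= ysol_const * G * exp (- (b * m * r)).
Proof.
  intros Hr. destruct (ysol_decay r Hr) as [Hy _].
  pose proof (coshpow_wexp_le r) as Hc. pose proof (g_bound r) as Hg.
  rewrite (Rabs_right r) in Hc, Hg by lra.
  unfold kern. rewrite !Rabs_mult, (Rabs_right (coshpow _ _ _)) by (left; apply coshpow_pos).
  pose proof (Rabs_pos (ysol r)). pose proof (Rabs_pos (g r)). pose proof (coshpow_pos m (wexp m) r).
  eapply Rle_trans; [apply Rmult_le_compat; [apply Rmult_le_pos; lra | lra |
                       apply Rmult_le_compat; [lra | lra | exact Hy | exact Hc] | exact Hg]|].
  right. replace (ysol_const * exp (- ((m - 1) * r)) * exp ((m - 1) * r))
    with (ysol_const * (exp (- ((m - 1) * r)) * exp ((m - 1) * r))) by ring.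
  rewrite <- exp_plus, Rplus_opp_l, exp_0. ring.
Qed.

Lemma kern_growth r : Rabs (kern g r) <= ysol_const * G * exp ((m - 1 - b * m) * Rabs r).
Proof.
  destruct (ysol_bounded r) as [Hy _].
  pose proof (coshpow_wexp_le r) as Hc. pose proof (g_bound r) as Hg.
  unfold kern. rewrite !Rabs_mult, (Rabs_right (coshpow _ _ _)) by (left; apply coshpow_pos).
  pose proof (Rabs_pos (ysol r)). pose proof (Rabs_pos (g r)). pose proof (coshpow_pos m (wexp m) r).
  eapply Rle_trans; [apply Rmult_le_compat; [apply Rmult_le_pos; lra | lra |
                       apply Rmult_le_compat; [lra | lra | exact Hy | exact Hc] | exact Hg]|].
  right. replace ((m - 1 - b * m) * Rabs r) with ((m - 1) * Rabs r + - (b * m * Rabs r)) by ring.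
  rewrite exp_plus. ring.
Qed.

Lemma tailint_decay_exists :
  exists I, forall s, 0 <= s -> Rabs (tailint g I s) <= ysol_const * G / (b * m) * exp (- (b * m * s)).
Proof.
  destruct (is_derive_exp_decay_limit (prim (kern g)) (kern g) (ysol_const * G) (b * m)) as [I HI].
  - nra.
  - intros s _. apply is_derive_prim, kern_continuous, g_cont.
  - intros s Hs. apply kern_decay, Hs.
  - exists I. exact HI.
Qed.

Lemma tailint_reflect_growth I :
  (forall s, 0 <= s -> Rabs (tailint g I s) <= ysol_const * G / (b * m) * exp (- (b * m * s))) ->
  forall s, 0 <= s -> Rabs (tailint g I (- s)) <=
    ysol_const * G / (b * m) + ysol_const * G / (m - 1 - b * m) * exp ((m - 1 - b * m) * s).
Proof.
  intros HI s Hs.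
  specialize (HI 0 (Rle_refl 0)). unfold tailint in HI.
  rewrite prim_0, Rminus_0_r, Rmult_0_r, Ropp_0, exp_0, Rmult_1_r in HI.
  pose proof (prim_reflect_bound (kern g) (ysol_const * G) (m - 1 - b * m) ltac:(lra)
                (kern_continuous g g_cont) kern_growth s Hs).
  unfold tailint. eapply Rle_trans; [apply Rabs_sub_le|]. lra.
Qed.

End BoundedRhs.

Lemma vsol_numerator_bound (y1 y2 t1 t2 G s : R) : 0 <= s -> 0 <= G ->
  Rabs y1 <= ysol_const * exp (- ((m - 1) * s)) -> Rabs y2 <= ysol_const ->
  Rabs t1 <= ysol_const * G / (b * m) + ysol_const * G / (m - 1 - b * m) * exp ((m - 1 - b * m) * s) ->
  Rabs t2 <= ysol_const * G / (b * m) * exp (- (b * m * s)) ->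
  Rabs (/ (2 * A * m) * (y1 * t1 + y2 * t2)) <= vsol_const * G * exp (- (b * m * s)).
Proof.
  intros Hs HG Hy1 Hy2 Ht1 Ht2.
  pose proof (Rabs_pos y1). pose proof (Rabs_pos y2). pose proof (Rabs_pos t1). pose proof (Rabs_pos t2).
  set (X := ysol_const * G / (b * m)) in *. set (Z := ysol_const * G / (m - 1 - b * m)) in *.
  set (E1 := exp (- ((m - 1) * s))) in *. set (Eg := exp ((m - 1 - b * m) * s)) in *.
  set (Ed := exp (- (b * m * s))) in *.
  assert (HEd : E1 * Eg = Ed) by (unfold E1, Eg, Ed; rewrite <- exp_plus; f_equal; ring).
  assert (HE1 : E1 <= Ed) by (apply exp_le_mono; nra).
  assert (0 < E1) by apply exp_pos. assert (0 < Eg) by apply exp_pos.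
  pose proof (Rle_trans _ _ _ (Rabs_pos y2) Hy2) as HC.
  assert (0 <= X) by (unfold X; apply Rdiv_le_0_compat; nra).
  assert (0 <= Z) by (unfold Z; apply Rdiv_le_0_compat; nra).
  assert (Hnum : Rabs (y1 * t1 + y2 * t2) <= ysol_const * (2 * X + Z) * Ed).
  { eapply Rle_trans; [apply Rabs_triang|]. rewrite !Rabs_mult.
    assert (Rabs y1 * Rabs t1 <= ysol_const * E1 * (X + Z * Eg)) by (apply Rmult_le_compat; lra).
    assert (Rabs y2 * Rabs t2 <= ysol_const * (X * Ed)) by (apply Rmult_le_compat; lra).
    assert (ysol_const * E1 * (X + Z * Eg) = ysol_const * X * E1 + ysol_const * Z * Ed)
      by (rewrite <- HEd; ring).
    assert (ysol_const * X * E1 <= ysol_const * X * Ed) by (apply Rmult_le_compat_l; nra).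
    nra. }
  rewrite Rabs_mult, Rabs_right by (left; apply Rinv_0_lt_compat; nra).
  apply (Rmult_le_compat_l (/ (2 * A * m))) in Hnum; [|left; apply Rinv_0_lt_compat; nra].
  eapply Rle_trans; [exact Hnum|]. right. unfold vsol_const, X, Z. field. nra.
Qed.

Lemma vsol_decay g G I J : 0 <= G -> (forall x, continuity_pt g x) ->
  (forall r, Rabs (g r) <= G * exp (- (b * m * Rabs r))) ->
  (forall s, 0 <= s -> Rabs (tailint g I s) <= ysol_const * G / (b * m) * exp (- (b * m * s))) ->
  (forall s, 0 <= s ->
     Rabs (tailint (reflect g) J s) <= ysol_const * G / (b * m) * exp (- (b * m * s))) ->
  forall s, 0 <= s ->
    Rabs (vsol g I J s) <= vsol_const * G * exp (- (b * m * s)) /\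
    Rabs (dvsol g I J s) <= vsol_const * G * exp (- (b * m * s)).
Proof.
  intros HG Hg Hgb HI HJ s Hs.
  assert (Hgr : forall r, Rabs (reflect g r) <= G * exp (- (b * m * Rabs r))).
  { intro r. unfold reflect. rewrite <- (Rabs_Ropp r). apply Hgb. }
  pose proof (tailint_reflect_growth (reflect g) G (reflect_continuous g Hg) Hgr J HJ s Hs) as Ht1.
  destruct (ysol_decay s Hs) as [Hy Hdy]. destruct (ysol_bounded (- s)) as [Hyr Hdyr].
  split.
  - apply vsol_numerator_bound; auto.
  - unfold dvsol, Rminus. rewrite Ropp_mult_distr_l.
    apply vsol_numerator_bound; auto. now rewrite Rabs_Ropp.
Qed.

Lemma vsol_reflect g I J s :
  vsol g I J s = vsol (reflect g) J I (- s) /\ dvsol g I J s = - dvsol (reflect g) J I (- s).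
Proof. unfold vsol, dvsol. rewrite reflect_reflect, Ropp_involutive. split; ring. Qed.

Lemma decaying_solution_exists g G : 0 <= G -> (forall x, continuity_pt g x) ->
  (forall r, Rabs (g r) <= G * exp (- (b * m * Rabs r))) ->
  exists f f', is_solution m g f f' /\
    forall s, Rabs (f s) <= vsol_const * G * exp (- (b * m * Rabs s)) /\
              Rabs (f' s) <= vsol_const * G * exp (- (b * m * Rabs s)).
Proof.
  intros HG Hg Hgb.
  assert (Hgr : forall r, Rabs (reflect g r) <= G * exp (- (b * m * Rabs r))).
  { intro r. unfold reflect. rewrite <- (Rabs_Ropp r). apply Hgb. }
  pose proof (reflect_continuous g Hg) as Hgc.
  destruct (tailint_decay_exists g G Hg Hgb) as [I HI].
  destruct (tailint_decay_exists (reflect g) G Hgc Hgr) as [J HJ].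
  exists (vsol g I J), (dvsol g I J). split; [now apply vsol_solution|]. intro s.
  destruct (Rle_dec 0 s) as [Hs | Hs].
  - rewrite (Rabs_right s) by lra. now apply vsol_decay.
  - destruct (vsol_reflect g I J s) as [-> ->]. rewrite Rabs_Ropp, (Rabs_left s) by lra.
    rewrite <- (reflect_reflect g) in HI.
    apply (vsol_decay (reflect g) G J I); auto; lra.
Qed.

End VariationOfParameters.
End WithLimit.
End DecayingSolution.

Theorem ode_weighted_solvable m b : 1 < m -> 0 < b -> b * m < m - 1 ->
  exists K, 0 <= K /\ forall (g : R -> R) M, (forall x, continuity_pt g x) ->
    (forall s, Rabs (g s) * coshpow m b s <= M) ->
    exists f f', is_solution m g f f' /\
      forall s, Rabs (f s) * coshpow m b s <= K * M /\ Rabs (f' s) * coshpow m b s <= K * M.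
Proof.
  intros Hm Hb Hbm. destruct (Kint_limit m Hm) as [A [HA HK]].
  set (Kv := vsol_const m A b). set (B := exp (b * ln 2)).
  assert (HKv : 0 <= Kv).
  { unfold Kv, vsol_const.
    pose proof (Rle_trans _ _ _ (Rabs_pos _) (proj1 (ysol_bounded m Hm A HA HK 0))).
    apply Rdiv_le_0_compat; [|nra]. apply Rmult_le_pos; [nra|].
    apply Rplus_le_le_0_compat; apply Rdiv_le_0_compat; nra. }
  exists (Kv * B). split; [pose proof (exp_pos (b * ln 2)); unfold B; nra|].
  intros g M Hg HgM.
  assert (HM : 0 <= M).
  { specialize (HgM 0). pose proof (Rabs_pos (g 0)). pose proof (coshpow_pos m b 0). nra. }
  destruct (decaying_solution_exists m Hm A HA HK b Hb Hbm g (M * B)) as [f [f' [Hsol Hf]]];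
    [pose proof (exp_pos (b * ln 2)); unfold B; nra | exact Hg |
     intro r; apply exp_bound_of_weighted; [lra | lra | exact HgM] |].
  exists f, f'. split; [exact Hsol|]. intro s. destruct (Hf s) as [H1 H2].
  replace (Kv * B * M) with (vsol_const m A b * (M * B)) by (unfold Kv; ring).
  split; apply weighted_of_exp_bound; [lra | lra | exact H1 | lra | lra | exact H2].
Qed.

(** * The differentiated equations *)

Inductive tanh_poly (m : R) : (R -> R) -> Prop :=
| tp_const (c : R) : tanh_poly m (fun _ => c)
| tp_tanh : tanh_poly m (tanhm m)
| tp_add (f g : R -> R) : tanh_poly m f -> tanh_poly m g -> tanh_poly m (fun s => f s + g s)
| tp_mul (f g : R -> R) : tanh_poly m f -> tanh_poly m g -> tanh_poly m (fun s => f s * g s)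
| tp_ext (f g : R -> R) : (forall s, f s = g s) -> tanh_poly m f -> tanh_poly m g.

Section TanhPoly.
Variable m : R.

Lemma tanh_poly_bounded f : tanh_poly m f -> exists B, forall s, Rabs (f s) <= B.
Proof.
  induction 1 as [c | | f g _ [Bf Hf] _ [Bg Hg] | f g _ [Bf Hf] _ [Bg Hg] | f g Hfg _ [Bf Hf]].
  - exists (Rabs c). intro; lra.
  - exists 1. apply Rabs_tanhm_le1.
  - exists (Bf + Bg). intro s. eapply Rle_trans; [apply Rabs_triang|].
    specialize (Hf s). specialize (Hg s). lra.
  - exists (Bf * Bg). intro s. rewrite Rabs_mult.
    apply Rmult_le_compat; auto using Rabs_pos.
  - exists Bf. intro s. now rewrite <- Hfg.
Qed.

Lemma tanh_poly_derive f : tanh_poly m f ->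
  exists f', tanh_poly m f' /\ forall s, is_derive f s (f' s).
Proof.
  induction 1 as [c | | f g _ [f' [Pf Hf]] _ [g' [Pg Hg]] | f g Tf [f' [Pf Hf]] Tg [g' [Pg Hg]]
                 | f g Hfg _ [f' [Pf Hf]]].
  - exists (fun _ => 0). split; [apply tp_const | intro; apply is_derive_cst].
  - exists (fun s => m * (1 + -1 * (tanhm m s * tanhm m s))). split.
    + apply tp_mul; [apply tp_const|]. apply tp_add; [apply tp_const|].
      apply tp_mul; [apply tp_const|]. apply tp_mul; apply tp_tanh.
    + intro s. eapply is_derive_eq_val; [|apply is_derive_tanhm]. unfold dtanhm. ring.
  - exists (fun s => f' s + g' s). split; [now apply tp_add | intro; now apply is_derive_add].
  - exists (fun s => f' s * g s + f s * g' s). split.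
    + apply tp_add; apply tp_mul; auto.
    + intro s. now apply is_derive_mul.
  - exists f'. split; [auto | intro s; apply (is_derive_ext f); auto].
Qed.

Lemma tanh_poly_Derive f : tanh_poly m f ->
  tanh_poly m (Derive f) /\ forall s, is_derive f s (Derive f s).
Proof.
  intros Hf. destruct (tanh_poly_derive f Hf) as [f' [Pf Hd]].
  assert (HD : forall s, Derive f s = f' s) by (intro; now apply is_derive_unique).
  split; [apply (tp_ext _ f'); auto | intro s; now rewrite HD].
Qed.

Lemma ode_a_tanh_poly : tanh_poly m (ode_a m).
Proof. apply tp_mul; [apply tp_const | apply tp_tanh]. Qed.

Lemma ode_b_tanh_poly : tanh_poly m (ode_b m).
Proof.
  apply (tp_ext _ (fun s => m * (m + 1) * (1 + -1 * (tanhm m s * tanhm m s)))).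
  - intro s. unfold ode_b. ring.
  - apply tp_mul; [apply tp_const|]. apply tp_add; [apply tp_const|].
    apply tp_mul; [apply tp_const|]. apply tp_mul; apply tp_tanh.
Qed.

End TanhPoly.

(* [dcoef m j i] is the coefficient of [f^(i)] in [(f'' + ode_a f' + ode_b f)^(j)]. *)
Fixpoint dcoef (m : R) (j i : nat) : R -> R :=
  match j with
  | O => match i with O => ode_b m | 1%nat => ode_a m | 2%nat => fun _ => 1 | _ => fun _ => 0 end
  | S j' => fun s => Derive (dcoef m j' i) s + match i with O => 0 | S i' => dcoef m j' i' s end
  end.

Definition lower_terms (m : R) (j : nat) (D : nat -> R -> R) (s : R) : R :=
  sum_f_R0 (fun i => dcoef m j i s * D i s) (S j).

Section DerivedEquation.
Variable m : R.

Lemma dcoef_tanh_poly j i : tanh_poly m (dcoef m j i).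
Proof.
  revert i. induction j as [|j IH]; intro i.
  - destruct i as [|[|[|i]]]; simpl; auto using ode_b_tanh_poly, ode_a_tanh_poly, tp_const.
  - simpl. apply tp_add; [apply (proj1 (tanh_poly_Derive m _ (IH i)))|].
    destruct i; [apply tp_const | apply IH].
Qed.

Lemma is_derive_dcoef j i s : is_derive (dcoef m j i) s (Derive (dcoef m j i) s).
Proof. apply (proj2 (tanh_poly_Derive m _ (dcoef_tanh_poly j i))). Qed.

Lemma dcoef_high j i s : (j + 2 < i)%nat -> dcoef m j i s = 0.
Proof.
  revert i s. induction j as [|j IH]; intros i s Hi.
  - destruct i as [|[|[|i]]]; simpl; auto; lia.
  - simpl. rewrite (Derive_ext _ (fun _ => 0)), Derive_const by (intro; apply IH; lia).
    destruct i; [lia|]. rewrite IH by lia. ring.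
Qed.

Lemma dcoef_top j s : dcoef m j (j + 2) s = 1.
Proof.
  revert s. induction j as [|j IH]; intros s; [reflexivity|].
  simpl. rewrite (Derive_ext _ (fun _ => 0)), Derive_const by (intro; apply dcoef_high; lia).
  rewrite IH. ring.
Qed.

Lemma is_derive_sum (F F' : nat -> R -> R) N s :
  (forall i, (i <= N)%nat -> is_derive (F i) s (F' i s)) ->
  is_derive (fun s => sum_f_R0 (fun i => F i s) N) s (sum_f_R0 (fun i => F' i s) N).
Proof.
  induction N as [|N IH]; intros H; simpl; [apply H; lia|].
  apply is_derive_add; [apply IH; intros; apply H; lia | apply H; lia].
Qed.

Lemma is_derive_lower_terms j (D : nat -> R -> R) s :
  (forall i, (i <= S j)%nat -> is_derive (D i) s (D (S i) s)) ->
  is_derive (lower_terms m j D) s (lower_terms m (S j) D s).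
Proof.
  intros HD. unfold lower_terms.
  eapply is_derive_eq_val; [|apply (is_derive_sum (fun i s => dcoef m j i s * D i s)
      (fun i s => Derive (dcoef m j i) s * D i s + dcoef m j i s * D (S i) s))].
  2:{ intros i Hi. apply is_derive_mul; [apply is_derive_dcoef | auto]. }
  rewrite plus_sum. simpl (dcoef m (S j)).
  transitivity (sum_f_R0 (fun i => Derive (dcoef m j i) s * D i s) (S (S j)) +
                sum_f_R0 (fun i => match i with O => 0 | S i' => dcoef m j i' s end * D i s) (S (S j))).
  - f_equal.
    + rewrite (tech5 _ (S j)), (Derive_ext (dcoef m j (S (S j))) (fun _ => 1)), Derive_const; [ring|].
      intro t. replace (S (S j)) with (j + 2)%nat by lia. apply dcoef_top.
    + rewrite (decomp_sum _ (S (S j))) by lia. simpl pred. rewrite Rmult_0_l, Rplus_0_l.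
      apply sum_eq. intros; reflexivity.
  - rewrite <- plus_sum. apply sum_eq. intros i Hi. ring.
Qed.

Lemma lower_terms_0 (D : nat -> R -> R) s :
  lower_terms m 0 D s = ode_b m s * D 0%nat s + ode_a m s * D 1%nat s.
Proof. unfold lower_terms. simpl. ring. Qed.

Lemma lower_terms_ext j (D D' : nat -> R -> R) s :
  (forall i, (i <= S j)%nat -> D i s = D' i s) -> lower_terms m j D s = lower_terms m j D' s.
Proof. intros H. apply sum_eq. intros i Hi. now rewrite H. Qed.

Lemma lower_terms_continuous j (D : nat -> R -> R) :
  (forall i, (i <= S j)%nat -> continuity (D i)) -> continuity (lower_terms m j D).
Proof.
  intros HD. unfold lower_terms.
  assert (Hsum : forall N, (N <= S j)%nat ->
            continuity (fun s => sum_f_R0 (fun i => dcoef m j i s * D i s) N)).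
  { induction N as [|N IH]; intros HN; simpl.
    - apply continuity_mult; [|apply HD; lia]. intro s. eapply is_derive_continuous, is_derive_dcoef.
    - apply continuity_plus; [apply IH; lia|]. apply continuity_mult; [|apply HD; lia].
      intro s. eapply is_derive_continuous, is_derive_dcoef. }
  apply Hsum. lia.
Qed.

Lemma lower_terms_weighted_bound j (D : nat -> R -> R) s w Bc Y : 0 <= w -> 0 <= Bc ->
  (forall i, (i <= S j)%nat -> Rabs (dcoef m j i s) <= Bc) ->
  (forall i, (i <= S j)%nat -> Rabs (D i s) * w <= Y) ->
  Rabs (lower_terms m j D s) * w <= INR (S (S j)) * Bc * Y.
Proof.
  intros Hw HBc HB HD. unfold lower_terms.
  eapply Rle_trans; [apply Rmult_le_compat_r; [exact Hw | apply sum_f_R0_triangle]|].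
  rewrite Rmult_comm, scal_sum.
  replace (INR (S (S j)) * Bc * Y) with (sum_f_R0 (fun _ => Bc * Y) (S j)) by (rewrite sum_cte; ring).
  apply sum_Rle. intros i Hi. rewrite Rabs_mult.
  pose proof (HB i Hi). pose proof (HD i Hi). pose proof (Rabs_pos (dcoef m j i s)).
  pose proof (Rabs_pos (D i s)). rewrite Rmult_assoc. apply Rmult_le_compat; nra.
Qed.

Lemma bound_le_nat (P : nat -> R -> Prop) N : (forall i B B', P i B -> B <= B' -> P i B') ->
  (forall i, (i <= N)%nat -> exists B, P i B) -> exists B, 0 <= B /\ forall i, (i <= N)%nat -> P i B.
Proof.
  intros Hmono H. induction N as [|N IH].
  - destruct (H 0%nat (le_n 0)) as [B HB]. exists (Rmax 0 B). split; [apply Rmax_l|].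
    intros i Hi. replace i with 0%nat by lia. eapply Hmono; [exact HB | apply Rmax_r].
  - destruct IH as [B [HB0 HB]]; [intros; apply H; lia|].
    destruct (H (S N) (le_n _)) as [B' HB']. exists (Rmax B B').
    split; [eapply Rle_trans; [exact HB0 | apply Rmax_l]|]. intros i Hi.
    destruct (Nat.eq_dec i (S N)) as [->|Hne].
    + eapply Hmono; [exact HB' | apply Rmax_r].
    + eapply Hmono; [apply HB; lia | apply Rmax_l].
Qed.

Lemma dcoef_uniform_bound N :
  exists B, 0 <= B /\ forall j i s, (j <= N)%nat -> (i <= N)%nat -> Rabs (dcoef m j i s) <= B.
Proof.
  destruct (bound_le_nat (fun j B => forall i s, (i <= N)%nat -> Rabs (dcoef m j i s) <= B) N)
    as [B [HB0 HB]].
  - intros j B B' HB HBB' i s Hi. specialize (HB i s Hi). lra.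
  - intros j _. destruct (bound_le_nat (fun i B => forall s, Rabs (dcoef m j i s) <= B) N) as [B [_ HB]].
    + intros i B B' HB HBB' s. specialize (HB s). lra.
    + intros i _. apply (tanh_poly_bounded m), dcoef_tanh_poly.
    + exists B. intros i s Hi. now apply HB.
  - exists B. split; [exact HB0|]. intros j i s Hj Hi. now apply HB.
Qed.

Section TowerBound.
Variables (k : nat) (Bc : R) (w : R -> R).
Hypothesis Bc_nonneg : 0 <= Bc.
Hypothesis dcoef_le : forall j i s, (j <= k)%nat -> (i <= k)%nat -> Rabs (dcoef m j i s) <= Bc.
Hypothesis w_nonneg : forall s, 0 <= w s.

Definition tower_factor : R := 1 + INR (S k) * Bc.

Lemma tower_factor_ge1 : 1 <= tower_factor.
Proof. unfold tower_factor. pose proof (pos_INR (S k)). nra. Qed.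

Lemma tower_weighted_bound (D E : nat -> R -> R) X : 0 <= X ->
  (forall s, Rabs (D 0%nat s) * w s <= X) -> (forall s, Rabs (D 1%nat s) * w s <= X) ->
  (forall j s, (j + 2 <= k)%nat -> Rabs (E j s) * w s <= X) ->
  (forall j s, (j + 2 <= k)%nat -> D (S (S j)) s = E j s - lower_terms m j D s) ->
  forall c s, (c <= k)%nat -> Rabs (D c s) * w s <= tower_factor ^ c * X.
Proof.
  intros HX H0 H1 HE HD c. pose proof tower_factor_ge1 as HL.
  induction c as [c IH] using (well_founded_induction Wf_nat.lt_wf). intros s Hc.
  destruct c as [|[|j]].
  - simpl. specialize (H0 s). lra.
  - simpl. specialize (H1 s). nra.
  - assert (Hpow : forall i, (i <= S j)%nat -> tower_factor ^ i * X <= tower_factor ^ S j * X).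
    { intros i Hi. apply Rmult_le_compat_r; [exact HX|]. apply Rle_pow; [lra | lia]. }
    assert (Hlow : Rabs (lower_terms m j D s) * w s <= INR (S (S j)) * Bc * (tower_factor ^ S j * X)).
    { apply lower_terms_weighted_bound; auto.
      - intros i Hi. apply dcoef_le; lia.
      - intros i Hi. eapply Rle_trans; [apply IH; lia | apply Hpow, Hi]. }
    assert (INR (S (S j)) <= INR (S k)) by (apply le_INR; lia).
    pose proof (pow_le tower_factor (S j) ltac:(lra)).
    pose proof (w_nonneg s). rewrite HD by lia.
    eapply Rle_trans; [apply Rmult_le_compat_r; [lra | apply Rabs_sub_le]|].
    rewrite Rmult_plus_distr_r. specialize (HE j s ltac:(lia)).
    assert (X <= tower_factor ^ S j * X)
      by (rewrite <- (Rmult_1_l X) at 1; apply Rmult_le_compat_r; [lra | apply pow_R1_Rle; lra]).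
    change (tower_factor ^ S (S j)) with (tower_factor * tower_factor ^ S j).
    set (P := tower_factor ^ S j) in *. unfold tower_factor in *.
    assert (INR (S (S j)) * Bc * (P * X) <= INR (S k) * Bc * (P * X))
      by (apply Rmult_le_compat_r; [nra | apply Rmult_le_compat_r; lra]).
    nra.
Qed.

Lemma tower_weighted_bound_top (D E : nat -> R -> R) X : 0 <= X ->
  (forall s, Rabs (D 0%nat s) * w s <= X) -> (forall s, Rabs (D 1%nat s) * w s <= X) ->
  (forall j s, (j + 2 <= k)%nat -> Rabs (E j s) * w s <= X) ->
  (forall j s, (j + 2 <= k)%nat -> D (S (S j)) s = E j s - lower_terms m j D s) ->
  forall c s, (c <= k)%nat -> Rabs (D c s) * w s <= tower_factor ^ k * X.
Proof.
  intros HX H0 H1 HE HD c s Hc.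
  eapply Rle_trans; [exact (tower_weighted_bound D E X HX H0 H1 HE HD c s Hc)|].
  apply Rmult_le_compat_r; [exact HX|]. apply Rle_pow; [apply tower_factor_ge1 | exact Hc].
Qed.

End TowerBound.

Definition image_tower (D : nat -> R -> R) (j : nat) (s : R) : R := D (S (S j)) s + lower_terms m j D s.

Lemma Ck_tower_continuous K (g : R -> R) (E : nat -> R -> R) :
  Ck_tower K g E -> forall a, (a <= K)%nat -> continuity (E a).
Proof.
  intros [_ [H1 H2]] a Ha. destruct (Nat.eq_dec a K) as [->|Hne]; [exact H2|].
  intro s. apply derivable_continuous_pt. exists (E (S a) s). apply H1. lia.
Qed.

Lemma image_tower_Ck k (f : R -> R) (D : nat -> R -> R) : (2 <= k)%nat -> Ck_tower k f D ->
  Ck_tower (k - 2) (fun s => D 2%nat s + ode_a m s * D 1%nat s + ode_b m s * D 0%nat s) (image_tower D).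
Proof.
  intros Hk HD. pose proof HD as [_ [HD1 _]]. split; [|split].
  - intro s. unfold image_tower, lower_terms. simpl. ring.
  - intros a Ha s. apply is_derive_Reals, is_derive_add; [apply is_derive_Reals, HD1; lia|].
    apply is_derive_lower_terms. intros i Hi. apply is_derive_Reals, HD1. lia.
  - unfold image_tower. replace (S (S (k - 2))) with k by lia.
    apply continuity_plus; [apply (Ck_tower_continuous k f D HD); lia|].
    apply lower_terms_continuous. intros i Hi. apply (Ck_tower_continuous k f D HD). lia.
Qed.

Lemma tower_representation k (f : R -> R) (D E : nat -> R -> R) : (2 <= k)%nat -> Ck_tower k f D ->
  (forall s, E 0%nat s = D 2%nat s + ode_a m s * D 1%nat s + ode_b m s * D 0%nat s) ->
  (forall a, (a < k - 2)%nat -> forall s, derivable_pt_lim (E a) s (E (S a) s)) ->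
  forall j, (j <= k - 2)%nat -> forall s, E j s = image_tower D j s.
Proof.
  intros Hk [_ [HD _]] HE0 HE j. unfold image_tower. induction j as [|j IH]; intros Hj s.
  - rewrite HE0. unfold lower_terms. simpl. ring.
  - apply (is_derive_uniq (E j) s); [apply is_derive_Reals, HE; lia|].
    apply (is_derive_ext (fun s => D (S (S j)) s + lower_terms m j D s));
      [intro; rewrite IH; auto; lia|].
    apply is_derive_add; [apply is_derive_Reals, HD; lia|].
    apply is_derive_lower_terms. intros i Hi. apply is_derive_Reals, HD. lia.
Qed.

(* [build_tower f0 f1 E N] prescribes the orders [0..N+1] of a tower with [D 0 = f0], [D 1 = f1]
   and [D (j+2) = E j - lower_terms j D]; entries above [N+1] are junk. *)
Fixpoint build_tower (f0 f1 : R -> R) (E : nat -> R -> R) (N : nat) : nat -> R -> R :=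
  match N with
  | O => fun a => match a with O => f0 | 1%nat => f1 | _ => fun _ => 0 end
  | S N' => fun a =>
      if Nat.eqb a (S (S N')) then fun s => E N' s - lower_terms m N' (build_tower f0 f1 E N') s
      else build_tower f0 f1 E N' a
  end.

Lemma build_tower_stable f0 f1 E N M a : (N <= M)%nat -> (a <= S N)%nat ->
  build_tower f0 f1 E M a = build_tower f0 f1 E N a.
Proof.
  intros HNM Ha. induction M as [|M IH].
  - now replace N with 0%nat by lia.
  - destruct (Nat.eq_dec N (S M)) as [->|Hne]; [reflexivity|].
    simpl. destruct (Nat.eqb_spec a (S (S M))); [lia | apply IH; lia].
Qed.

Lemma build_tower_spec f0 f1 E k :
  build_tower f0 f1 E k 0%nat = f0 /\ build_tower f0 f1 E k 1%nat = f1 /\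
  forall j s, (j < k)%nat ->
    build_tower f0 f1 E k (S (S j)) s = E j s - lower_terms m j (build_tower f0 f1 E k) s.
Proof.
  split; [|split]; [rewrite (build_tower_stable f0 f1 E 0 k); auto; lia ..|].
  intros j s Hj. rewrite (build_tower_stable f0 f1 E (S j) k) by lia. simpl. rewrite Nat.eqb_refl.
  f_equal. apply lower_terms_ext. intros i Hi. rewrite (build_tower_stable f0 f1 E j k) by lia. auto.
Qed.

End DerivedEquation.

(** * Weighted norms and the operator [T0] *)

Lemma Rsup_range_spec (w : R -> R) M : (forall s, w s <= M) ->
  (forall s, w s <= Rsup (fun y => exists s, y = w s)) /\ Rsup (fun y => exists s, y = w s) <= M.
Proof.
  intros HM. unfold Rsup.
  destruct (excluded_middle_informative _) as [Hl | Hn].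
  - destruct (constructive_indefinite_description _ Hl) as [l [H1 H2]]. simpl. split.
    + intro s. apply H1. now exists s.
    + apply H2. intros y [s ->]. auto.
  - exfalso. apply Hn. destruct (completeness (fun y => exists s, y = w s)) as [l Hl].
    + exists M. intros y [s ->]. auto.
    + now exists (w 0), 0.
    + now exists l.
Qed.

Lemma sum_f_R0_nonneg (f : nat -> R) N : (forall i, (i <= N)%nat -> 0 <= f i) -> 0 <= sum_f_R0 f N.
Proof.
  induction N as [|N IH]; intros H; simpl; [apply H; lia|].
  apply Rplus_le_le_0_compat; [apply IH; intros; apply H | apply H]; lia.
Qed.

Lemma sum_f_R0_ge_term (f : nat -> R) N a : (forall i, (i <= N)%nat -> 0 <= f i) -> (a <= N)%nat ->
  f a <= sum_f_R0 f N.
Proof.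
  induction N as [|N IH]; intros H Ha; simpl.
  - replace a with 0%nat by lia. lra.
  - pose proof (H (S N) (le_n _)).
    destruct (Nat.eq_dec a (S N)) as [->|Hne].
    + pose proof (sum_f_R0_nonneg f N ltac:(intros; apply H; lia)). lra.
    + pose proof (IH ltac:(intros; apply H; lia) ltac:(lia)). lra.
Qed.

Lemma wval_nonneg n q D a s : 0 <= wval n q D a s.
Proof. unfold wval. apply Rmult_le_pos; [apply Rabs_pos | left; apply exp_pos]. Qed.

Lemma wval_le_wnorm n K q D : finite_wnorm n K q D ->
  forall a s, (a <= K)%nat -> wval n q D a s <= wnorm n K q D.
Proof.
  intros HF a s Ha.
  assert (Hsup : forall a, (a <= K)%nat ->
            forall s, wval n q D a s <= Rsup (fun y => exists s, y = wval n q D a s)).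
  { intros a' Ha'. destruct (HF a' Ha') as [M HM]. apply (Rsup_range_spec _ M HM). }
  eapply Rle_trans; [apply Hsup, Ha|]. unfold wnorm.
  apply (sum_f_R0_ge_term (fun a => Rsup (fun y => exists s, y = wval n q D a s))); auto.
  intros i Hi. eapply Rle_trans; [apply wval_nonneg | apply (Hsup i Hi 0)].
Qed.

Lemma wnorm_le n K q D X : (forall a s, (a <= K)%nat -> wval n q D a s <= X) ->
  wnorm n K q D <= INR (S K) * X.
Proof.
  intros H. unfold wnorm. rewrite Rmult_comm, <- sum_cte. apply sum_Rle. intros i Hi.
  apply (Rsup_range_spec (fun s => wval n q D i s) X). intro s. auto.
Qed.

Lemma wnorm_nonneg n K q D : finite_wnorm n K q D -> 0 <= wnorm n K q D.
Proof.
  intros HF. eapply Rle_trans; [apply (wval_nonneg n q D 0 0) | apply wval_le_wnorm; auto; lia].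
Qed.

Section Operator.
Variables (n k : nat) (q : R) (phid : R -> R).
Hypothesis n_ge3 : (3 <= n)%nat.
Hypothesis k_ge2 : (2 <= k)%nat.
Hypothesis q_gt : - (INR n - 2) < q.
Hypothesis q_neg : q < 0.
Hypothesis phid_spec : forall s, derivable_pt_lim (phi n) s (phid s).

Let m : R := INR n - 1.
Let b : R := - q / m.

Lemma INR_n_ge3 : 3 <= INR n.
Proof. replace 3 with (INR 3) by (simpl; ring). now apply le_INR. Qed.

Lemma scale_gt1 : 1 < m.
Proof. pose proof INR_n_ge3. unfold m. lra. Qed.

Lemma weight_exp_pos : 0 < b.
Proof. pose proof scale_gt1. unfold b. apply Rdiv_lt_0_compat; lra. Qed.

Lemma weight_exp_small : b * m < m - 1.
Proof. pose proof scale_gt1. unfold b, m in *. field_simplify; lra. Qed.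

Lemma wval_coshpow D a s : wval n q D a s = Rabs (D a s) * coshpow m b s.
Proof.
  pose proof scale_gt1. unfold wval, phi, coshpow. fold m. rewrite Rpower_mult.
  do 2 f_equal. unfold b. field. lra.
Qed.

Lemma phid_div_phi s : phid s / phi n s = tanhm m s.
Proof.
  pose proof scale_gt1.
  assert (Hc : is_derive (phi n) s (1 / m * m * tanhm m s * coshpow m (1 / m) s))
    by apply is_derive_coshpow.
  rewrite (is_derive_uniq _ _ _ _ (proj2 (is_derive_Reals _ _ _) (phid_spec s)) Hc).
  unfold phi. fold m. pose proof (coshpow_pos m (1 / m) s). unfold coshpow in *. field. lra.
Qed.

Lemma phi_pow s : phi n s ^ (2 * n - 2) = cosh (m * s) ^ 2.
Proof.
  pose proof INR_n_ge3. unfold phi. fold m.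
  rewrite <- Rpower_pow by (apply exp_pos). rewrite Rpower_mult.
  replace (1 / m * INR (2 * n - 2)) with (INR 2).
  - apply Rpower_pow, cosh_pos.
  - rewrite minus_INR, mult_INR by lia. unfold m. simpl. field. lra.
Qed.

Lemma T0_ode D s : T0 n phid D s = D 2%nat s + ode_a m s * D 1%nat s + ode_b m s * D 0%nat s.
Proof.
  pose proof scale_gt1. unfold T0. rewrite phid_div_phi, phi_pow.
  unfold ode_a, ode_b. rewrite one_sub_tanhm2. fold m.
  replace (INR n) with (m + 1) by (unfold m; ring). pose proof (cosh_pos (m * s)). field. lra.
Qed.

Lemma weighted_le_wnorm K D : finite_wnorm n K q D ->
  forall a s, (a <= K)%nat -> Rabs (D a s) * coshpow m b s <= wnorm n K q D.
Proof. intros HF a s Ha. rewrite <- wval_coshpow. now apply wval_le_wnorm. Qed.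

Lemma wnorm_le_weighted K D X : (forall a s, (a <= K)%nat -> Rabs (D a s) * coshpow m b s <= X) ->
  wnorm n K q D <= INR (S K) * X.
Proof. intros H. apply wnorm_le. intros a s Ha. rewrite wval_coshpow. auto. Qed.

Lemma finite_wnorm_of_weighted K D X : (forall a s, (a <= K)%nat -> Rabs (D a s) * coshpow m b s <= X) ->
  finite_wnorm n K q D.
Proof. intros H a Ha. exists X. intro s. rewrite wval_coshpow. auto. Qed.

Lemma T0_tower (D E : nat -> R -> R) :
  Ck_tower (k - 2) (fun s => D 2%nat s + ode_a m s * D 1%nat s + ode_b m s * D 0%nat s) E ->
  Ck_tower (k - 2) (T0 n phid D) E.
Proof. intros [H0 H12]. split; [intro s; now rewrite T0_ode | exact H12]. Qed.

Lemma image_tower_weighted_bound Bc (f : R -> R) (D : nat -> R -> R) : 0 <= Bc ->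
  (forall j i s, (j <= k)%nat -> (i <= k)%nat -> Rabs (dcoef m j i s) <= Bc) ->
  in_Ckq n k q f D ->
  forall j s, (j <= k - 2)%nat ->
    Rabs (image_tower m D j s) * coshpow m b s <= tower_factor k Bc * wnorm n k q D.
Proof.
  intros HBc0 HBc [_ HF] j s Hj. pose proof (coshpow_pos m b s).
  pose proof (weighted_le_wnorm k D HF) as HDw.
  assert (Hlow : Rabs (lower_terms m j D s) * coshpow m b s <= INR (S (S j)) * Bc * wnorm n k q D).
  { apply lower_terms_weighted_bound; [lra | lra | intros; apply HBc; lia | intros; apply HDw; lia]. }
  assert (INR (S (S j)) * Bc * wnorm n k q D <= INR (S k) * Bc * wnorm n k q D).
  { apply Rmult_le_compat_r; [apply wnorm_nonneg; auto|].
    apply Rmult_le_compat_r; [lra | apply le_INR; lia]. }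
  pose proof (HDw (S (S j)) s ltac:(lia)).
  unfold image_tower. eapply Rle_trans; [apply Rmult_le_compat_r; [lra | apply Rabs_triang]|].
  unfold tower_factor. lra.
Qed.

Lemma T0_bounded : exists C : R, 0 <= C /\
  forall (f : R -> R) (D : nat -> R -> R), in_Ckq n k q f D ->
    (exists E, in_Ckq n (k - 2) q (T0 n phid D) E) /\
    (forall E, Ck_tower (k - 2) (T0 n phid D) E -> wnorm n (k - 2) q E <= C * wnorm n k q D).
Proof.
  destruct (dcoef_uniform_bound m k) as [Bc [HBc0 HBc]].
  exists (INR (S (k - 2)) * tower_factor k Bc).
  split; [apply Rmult_le_pos; [apply pos_INR | pose proof (tower_factor_ge1 k Bc HBc0); lra]|].
  intros f D Hf. pose proof (image_tower_weighted_bound Bc f D HBc0 HBc Hf) as Himg.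
  split.
  - exists (image_tower m D). split.
    + apply T0_tower, (image_tower_Ck m k f); [exact k_ge2 | apply Hf].
    + apply (finite_wnorm_of_weighted _ _ _ Himg).
  - intros E HE. rewrite Rmult_assoc. apply wnorm_le_weighted. intros a s Ha.
    rewrite (tower_representation m k f D E k_ge2 (proj1 Hf)); auto.
    + intro t. destruct HE as [HE0 _]. now rewrite HE0, T0_ode.
    + apply HE.
Qed.

Lemma T0_injective (f1 f2 : R -> R) (D1 D2 : nat -> R -> R) :
  in_Ckq n k q f1 D1 -> in_Ckq n k q f2 D2 ->
  (forall s, T0 n phid D1 s = T0 n phid D2 s) -> forall s, f1 s = f2 s.
Proof.
  intros [[H10 [H11 _]] HF1] [[H20 [H21 _]] HF2] HT s.
  pose proof scale_gt1. pose proof weight_exp_pos.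
  assert (Hz : forall s, D1 0%nat s - D2 0%nat s = 0).
  { apply (vanishing_homogeneous_zero m H _ (fun s => D1 1%nat s - D2 1%nat s)).
    - split; intro t; [apply is_derive_sub; apply is_derive_Reals; [apply H11 | apply H21]; lia|].
      specialize (HT t). rewrite !T0_ode in HT.
      eapply is_derive_eq_val;
        [|apply is_derive_sub; apply is_derive_Reals; [apply H11 | apply H21]; lia].
      lra.
    - apply (weighted_bounded_vanishes m b _ (wnorm n k q D1 + wnorm n k q D2)); [lra | lra|].
      intro t. pose proof (weighted_le_wnorm k D1 HF1 0 t ltac:(lia)).
      pose proof (weighted_le_wnorm k D2 HF2 0 t ltac:(lia)). pose proof (coshpow_pos m b t).
      eapply Rle_trans; [apply Rmult_le_compat_r; [lra | apply Rabs_sub_le]|]. lra. }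
  rewrite <- H10, <- H20. specialize (Hz s). lra.
Qed.

Section Inverse.
Variables (Kode Bc : R).
Hypothesis Kode_nonneg : 0 <= Kode.
Hypothesis ode_solvable : forall (g : R -> R) M, (forall x, continuity_pt g x) ->
  (forall s, Rabs (g s) * coshpow m b s <= M) ->
  exists f f', is_solution m g f f' /\
    forall s, Rabs (f s) * coshpow m b s <= Kode * M /\ Rabs (f' s) * coshpow m b s <= Kode * M.
Hypothesis Bc_nonneg : 0 <= Bc.
Hypothesis dcoef_le : forall j i s, (j <= k)%nat -> (i <= k)%nat -> Rabs (dcoef m j i s) <= Bc.

Lemma rhs_solution (g : R -> R) (E : nat -> R -> R) : in_Ckq n (k - 2) q g E ->
  exists f0 f1, is_solution m (E 0%nat) f0 f1 /\
    forall s, Rabs (f0 s) * coshpow m b s <= Kode * wnorm n (k - 2) q E /\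
              Rabs (f1 s) * coshpow m b s <= Kode * wnorm n (k - 2) q E.
Proof.
  intros [HE HF]. apply ode_solvable.
  - apply (Ck_tower_continuous (k - 2) g E HE). lia.
  - intro s. apply weighted_le_wnorm; auto. lia.
Qed.

Lemma solution_tower_bound (D E : nat -> R -> R) : finite_wnorm n (k - 2) q E ->
  (forall s, Rabs (D 0%nat s) * coshpow m b s <= Kode * wnorm n (k - 2) q E) ->
  (forall s, Rabs (D 1%nat s) * coshpow m b s <= Kode * wnorm n (k - 2) q E) ->
  (forall j s, (j + 2 <= k)%nat -> D (S (S j)) s = E j s - lower_terms m j D s) ->
  forall c s, (c <= k)%nat ->
    Rabs (D c s) * coshpow m b s <= tower_factor k Bc ^ k * ((Kode + 1) * wnorm n (k - 2) q E).
Proof.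
  intros HF H0 H1 HD. pose proof (wnorm_nonneg n (k - 2) q E HF).
  apply (tower_weighted_bound_top m k Bc (coshpow m b) Bc_nonneg dcoef_le
           ltac:(intro; left; apply coshpow_pos) D E); auto.
  - apply Rmult_le_pos; lra.
  - intro s. specialize (H0 s). nra.
  - intro s. specialize (H1 s). nra.
  - intros j s Hj. pose proof (weighted_le_wnorm (k - 2) E HF j s ltac:(lia)). nra.
Qed.

Lemma T0_inverse_estimate (f : R -> R) (D : nat -> R -> R) : in_Ckq n k q f D ->
  forall E, Ck_tower (k - 2) (T0 n phid D) E ->
    wnorm n k q D <= INR (S k) * (tower_factor k Bc ^ k * (Kode + 1)) * wnorm n (k - 2) q E.
Proof.
  intros Hf E HE. pose proof scale_gt1. pose proof weight_exp_pos.
  pose proof Hf as [Htw HF]. pose proof Htw as [_ [HD1 _]].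
  assert (Hrep : forall j s, (j <= k - 2)%nat -> E j s = image_tower m D j s).
  { intros j s Hj. apply (tower_representation m k f D E k_ge2 Htw); auto.
    - intro t. destruct HE as [HE0 _]. now rewrite HE0, T0_ode.
    - apply HE. }
  assert (HEF : finite_wnorm n (k - 2) q E).
  { apply (finite_wnorm_of_weighted _ _ (tower_factor k Bc * wnorm n k q D)).
    intros a s Ha. rewrite Hrep by auto. now apply (image_tower_weighted_bound Bc f). }
  destruct (rhs_solution (T0 n phid D) E (conj HE HEF)) as [f0 [f1 [[Hf0 Hf1] Hfb]]].
  assert (Hz : forall s, D 0%nat s - f0 s = 0).
  { apply (vanishing_homogeneous_zero m H _ (fun s => D 1%nat s - f1 s)).
    - split; intro t; [apply is_derive_sub; [apply is_derive_Reals, HD1; lia | apply Hf0]|].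
      eapply is_derive_eq_val; [|apply is_derive_sub; [apply is_derive_Reals, HD1; lia | apply Hf1]].
      rewrite (Hrep 0%nat t ltac:(lia)). unfold image_tower. rewrite lower_terms_0. ring.
    - apply (weighted_bounded_vanishes m b _ (wnorm n k q D + Kode * wnorm n (k - 2) q E));
        [lra | lra |].
      intro t. pose proof (weighted_le_wnorm k D HF 0 t ltac:(lia)). destruct (Hfb t) as [Hb _].
      pose proof (coshpow_pos m b t).
      eapply Rle_trans; [apply Rmult_le_compat_r; [lra | apply Rabs_sub_le]|]. lra. }
  assert (Hz1 : forall s, D 1%nat s = f1 s).
  { intro s. apply (is_derive_uniq (D 0%nat) s); [apply is_derive_Reals, HD1; lia|].
    apply (is_derive_ext f0); [intro t; specialize (Hz t); lra | apply Hf0]. }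
  rewrite Rmult_assoc. apply wnorm_le_weighted. intros c s Hc.
  rewrite Rmult_assoc. apply solution_tower_bound; auto.
  - intro t. replace (D 0%nat t) with (f0 t) by (specialize (Hz t); lra). apply Hfb.
  - intro t. rewrite Hz1. apply Hfb.
  - intros j t Hj. rewrite Hrep by lia. unfold image_tower. ring.
Qed.

Lemma T0_right_inverse (g : R -> R) (E : nat -> R -> R) : in_Ckq n (k - 2) q g E ->
  exists (f : R -> R) (D : nat -> R -> R), in_Ckq n k q f D /\ forall s, T0 n phid D s = g s.
Proof.
  intros HgE. pose proof HgE as [[HE0 [HE1 HE2]] HEF].
  destruct (rhs_solution g E HgE) as [f0 [f1 [[Hf0 Hf1] Hfb]]].
  set (D := build_tower m f0 f1 E k).
  destruct (build_tower_spec m f0 f1 E k) as [HD0 [HD1 HDr]]. fold D in HD0, HD1, HDr.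
  assert (Hder : forall c, (c < k)%nat -> forall s, is_derive (D c) s (D (S c) s)).
  { intro c. induction c as [c IH] using (well_founded_induction Wf_nat.lt_wf). intros Hc s.
    destruct c as [|[|j]].
    - rewrite HD0, HD1. apply Hf0.
    - rewrite HD1, HDr, lower_terms_0, HD0, HD1 by lia.
      eapply is_derive_eq_val; [|apply Hf1]. ring.
    - apply (is_derive_ext (fun s => E j s - lower_terms m j D s)); [intro t; rewrite HDr; auto; lia|].
      rewrite HDr by lia. apply is_derive_sub; [apply is_derive_Reals, HE1; lia|].
      apply is_derive_lower_terms. intros i Hi. apply IH; lia. }
  exists f0, D. split; [split; [split; [|split]|]|].
  - intro s. now rewrite HD0.
  - intros a Ha s. apply is_derive_Reals, Hder, Ha.
  - replace k with (S (S (k - 2))) at 1 by lia.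
    intro s. apply (continuity_pt_ext (fun s => E (k - 2)%nat s - lower_terms m (k - 2) D s));
      [intro t; rewrite HDr; auto; lia|].
    apply continuity_minus; [exact HE2|]. apply lower_terms_continuous. intros i Hi t.
    eapply is_derive_continuous, Hder. lia.
  - apply (finite_wnorm_of_weighted _ _ (tower_factor k Bc ^ k * ((Kode + 1) * wnorm n (k - 2) q E))).
    intros a s Ha. apply solution_tower_bound; auto.
    + intro t. rewrite HD0. apply Hfb.
    + intro t. rewrite HD1. apply Hfb.
    + intros j t Hj. apply HDr. lia.
  - intro s. rewrite T0_ode, HDr, lower_terms_0, HD0, HD1, HE0 by lia. ring.
Qed.

End Inverse.

Lemma T0_surjective (g : R -> R) (E : nat -> R -> R) : in_Ckq n (k - 2) q g E ->
  exists (f : R -> R) (D : nat -> R -> R), in_Ckq n k q f D /\ forall s, T0 n phid D s = g s.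
Proof.
  destruct (ode_weighted_solvable m b scale_gt1 weight_exp_pos weight_exp_small) as [Kode [HK0 HK]].
  destruct (dcoef_uniform_bound m k) as [Bc [HBc0 HBc]].
  now apply (T0_right_inverse Kode Bc).
Qed.

Lemma T0_inverse_bounded : exists C' : R, 0 <= C' /\
  forall (f : R -> R) (D : nat -> R -> R), in_Ckq n k q f D ->
    forall E, Ck_tower (k - 2) (T0 n phid D) E -> wnorm n k q D <= C' * wnorm n (k - 2) q E.
Proof.
  destruct (ode_weighted_solvable m b scale_gt1 weight_exp_pos weight_exp_small) as [Kode [HK0 HK]].
  destruct (dcoef_uniform_bound m k) as [Bc [HBc0 HBc]].
  exists (INR (S k) * (tower_factor k Bc ^ k * (Kode + 1))). split.
  - pose proof (pos_INR (S k)).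
    pose proof (pow_le _ k (Rle_trans _ _ _ Rle_0_1 (tower_factor_ge1 k Bc HBc0))).
    apply Rmult_le_pos; [lra | apply Rmult_le_pos; lra].
  - intros f D Hf. now apply (T0_inverse_estimate Kode Bc HK0 HK HBc0 HBc f).
Qed.

End Operator.

Theorem lemma4p3 (n k : nat) (q : R) (phid : R -> R)
  (Hn : (3 <= n)%nat) (Hk : (2 <= k)%nat)
  (Hq1 : - (INR n - 2) < q) (Hq2 : q < 0)
  (Hphid : forall s, derivable_pt_lim (phi n) s (phid s)) :
  (exists C : R, 0 <= C /\
     forall (f : R -> R) (D : nat -> R -> R), in_Ckq n k q f D ->
       (exists E, in_Ckq n (k - 2) q (T0 n phid D) E) /\
       (forall E, Ck_tower (k - 2) (T0 n phid D) E ->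
          wnorm n (k - 2) q E <= C * wnorm n k q D)) /\
  (forall (g : R -> R) (E : nat -> R -> R), in_Ckq n (k - 2) q g E ->
     exists (f : R -> R) (D : nat -> R -> R),
       in_Ckq n k q f D /\ forall s, T0 n phid D s = g s) /\
  (forall (f1 f2 : R -> R) (D1 D2 : nat -> R -> R),
     in_Ckq n k q f1 D1 -> in_Ckq n k q f2 D2 ->
     (forall s, T0 n phid D1 s = T0 n phid D2 s) ->
     forall s, f1 s = f2 s) /\
  (exists C' : R, 0 <= C' /\
     forall (f : R -> R) (D : nat -> R -> R), in_Ckq n k q f D ->
       forall E, Ck_tower (k - 2) (T0 n phid D) E ->
         wnorm n k q D <= C' * wnorm n (k - 2) q E).
Proof.
  split; [|split; [|split]].
  - now apply T0_bounded.
  - now apply T0_surjective.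
  - now apply T0_injective.
  - now apply T0_inverse_bounded.
Qed.
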